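(* Let $S(t,z)=\sum_\pi t^{|\pi|}z^{\mathrm{rmax}(\pi)}$ over all separable permutations, which equals (with $r=\sqrt{t^2-6t+1}$) $$S(t,z)=\frac{4\sqrt{\left(-\frac{1}{4}r-tz+\frac{t}{4}+\frac{5}{4}\right)^2+r-t-1}-r+4tz+t-3}{2(r-t-1)}.$$ Define $$E(t,z_1,z_2,z_3)=z_1z_2z_3t+\frac{(S(t,z_1)+1)(S(t,z_2)+1)(S(t,z_3)+1)\,t^2z_1^2z_2z_3}{(1-S(t,z_1)S(t,z_3))(1-S(t,z_1)S(t,z_2))},$$ $$A(z_2,z_3)=S(t,z_2)\left(z_3t+\frac{S(t,z_3)^2}{S(t,z_3)+1}\right),\qquad D=1-A(z_2,z_3)-tz_2z_3,$$ and $E=E(t,z_1,z_2,z_3)$. For an ordered triple $T=(\mathrm{stat}_1,\mathrm{stat}_2,\mathrm{stat}_3)$ write $G_T=\sum_\pi t^{|\pi|}z_1^{\mathrm{stat}_1(\pi)}z_2^{\mathrm{stat}_2(\pi)}z_3^{\mathrm{stat}_3(\pi)}$. Then: (i) for every $T\in\{(\mathrm{lmax},\mathrm{rmax},\mathrm{lmin}),(\mathrm{lmin},\mathrm{rmin},\mathrm{lmax}),(\mathrm{rmin},\mathrm{rmax},\mathrm{lmin}),(\mathrm{rmax},\mathrm{rmin},\mathrm{lmax})\}$, $G_T$ over all separable permutations equals $E/D$; (ii) for $T\in\{(\mathrm{lmax},\mathrm{rmax},\mathrm{lmin}),(\mathrm{rmin},\mathrm{rmax},\mathrm{lmin})\}$,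 $G_T$ over reducible separable permutations equals $E-z_1z_2z_3t$, and over irreducible separable permutations equals $$\frac{1}{D}\Bigl(z_1z_2z_3t+\bigl(A(z_2,z_3)+tz_2z_3\bigr)\bigl(E-z_1z_2z_3t\bigr)\Bigr);$$ (iii) for $T\in\{(\mathrm{lmin},\mathrm{rmin},\mathrm{lmax}),(\mathrm{rmax},\mathrm{rmin},\mathrm{lmax})\}$, $G_T$ over irreducible separable permutations equals $E$, and over reducible separable permutations equals $$-z_1z_2z_3t+\frac{1}{D}\Bigl(z_1z_2z_3t+\bigl(A(z_2,z_3)+tz_2z_3\bigr)\bigl(E-z_1z_2z_3t\bigr)\Bigr).$$
   Context: A permutation of length $n$ is a word $\pi=\pi_1\cdots\pi_n$ containing each element of $[n]$ exactly once; $|\pi|=n$. For $\pi$ of length $m$, $\sigma$ of length $n$: $\pi\oplus\sigma=\pi_1\cdots\pi_m(\sigma_1+m)\cdots(\sigma_n+m)$, $\pi\ominus\sigma=(\pi_1+n)\cdots(\pi_m+n)\sigma_1\cdots\sigma_n$. Separable permutations are those of length $\ge1$ obtained from $1$ by repeatedly applying $\oplus,\ominus$ (equivalently, avoiding $2413$ and $3142$). The permutation $1$ is irreducible; a permutation of length $n\ge2$ is irreducible if there is no $i$, $2\le i\le n$, such that every element of $\pi_1\cdots\pi_{i-1}$ is less than every element of $\pi_i\cdots\pi_n$; reducible means not irreducible (length $\ge2$). $\pi_i$ is a left-to-right maximum (minimum) if $\pi_i>\pi_j$ ($\pi_i<\pi_j$) for all $j<i$, a right-to-left maximum (minimum) if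 $\pi_i>\pi_j$ ($\pi_i<\pi_j$) for all $j>i$; $\mathrm{lmax},\mathrm{lmin},\mathrm{rmax},\mathrm{rmin}$ count these. Square roots are the branches giving formal power series in $t$. *)

From HB Require Import structures.
From mathcomp Require Import all_boot all_order all_algebra all_fingroup.
From mathcomp Require Import mpoly.
From Stdlib Require Import ClassicalEpsilon.

Set Implicit Arguments.
Unset Strict Implicit.
Unset Printing Implicit Defensive.

Import Order.TTheory GRing.Theory Num.Theory.
Local Open Scope ring_scope.

Definition word (n : nat) (p : 'S_n) : seq nat := [seq (p i).+1 | i <- enum 'I_n].

Definition dsum (p s : seq nat) : seq nat := p ++ [seq (x + size p)%N | x <- s].
Definition dskew (p s : seq nat) : seq nat := [seq (x + size s)%N | x <- p] ++ s.

Inductive separable : seq nat -> Prop :=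
| sep_one : separable [:: 1%N]
| sep_sum p s : separable p -> separable s -> separable (dsum p s)
| sep_skew p s : separable p -> separable s -> separable (dskew p s).

Definition decP (P : Prop) : bool :=
  if excluded_middle_informative P then true else false.

Definition separableb (w : seq nat) : bool := decP (separable w).

(* reducible: length >= 2 and some split position i (2 <= i <= n), i.e. a
   nonempty proper prefix of length k = i-1 (1 <= k <= n-1), with every entry
   of the prefix smaller than every entry of the suffix. *)
Definition reducible (w : seq nat) : bool :=
  (2 <= size w)%N &&
  has (fun k => all (fun a => all (fun b => (a < b)%N) (drop k w)) (take k w))
      (iota 1 (size w).-1).

(* irreducible: the permutation 1, or length >= 2 and not reducible
   (all separable permutations have length >= 1). *)
Definition irreducible (w : seq nat) : bool := (1 <= size w)%N && ~~ reducible w.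

Definition lmax (w : seq nat) : nat :=
  count (fun i => all (fun j => (nth 0 w j < nth 0 w i)%N) (iota 0 i)) (iota 0 (size w)).
Definition lmin (w : seq nat) : nat :=
  count (fun i => all (fun j => (nth 0 w i < nth 0 w j)%N) (iota 0 i)) (iota 0 (size w)).
Definition rmax (w : seq nat) : nat :=
  count (fun i => all (fun j => (nth 0 w j < nth 0 w i)%N) (iota i.+1 (size w - i.+1)))
        (iota 0 (size w)).
Definition rmin (w : seq nat) : nat :=
  count (fun i => all (fun j => (nth 0 w i < nth 0 w j)%N) (iota i.+1 (size w - i.+1)))
        (iota 0 (size w)).

Definition fps (R : Type) := nat -> R.

Definition fadd (R : comRingType) (f g : fps R) : fps R := fun n => f n + g n.
Definition fopp (R : comRingType) (f : fps R) : fps R := fun n => - f n.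
Definition fsub (R : comRingType) (f g : fps R) : fps R := fun n => f n - g n.
Definition fmul (R : comRingType) (f g : fps R) : fps R :=
  fun n => \sum_(i < n.+1) f i * g (n - i)%N.
Definition fmono (R : comRingType) (c : R) (k : nat) : fps R :=
  fun n => if n == k then c else 0.
Definition fone (R : comRingType) : fps R := fmono 1 0.

Fixpoint finv_seq (R : comUnitRingType) (f : fps R) (n : nat) : seq R :=
  match n with
  | 0 => [:: (f 0%N)^-1]
  | m.+1 => let s := finv_seq f m in
            rcons s (- (f 0%N)^-1 * \sum_(i < m.+1) f i.+1 * nth 0 s (m - i)%N)
  end.
Definition finv (R : comUnitRingType) (f : fps R) : fps R :=
  fun n => nth 0 (finv_seq f n) n.
Definition fdiv (R : comUnitRingType) (f g : fps R) : fps R := fmul f (finv g).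

Definition Rz := {mpoly rat[3]}.
Definition z1 : Rz := 'X_(@Ordinal 3 0 isT).
Definition z2 : Rz := 'X_(@Ordinal 3 1 isT).
Definition z3 : Rz := 'X_(@Ordinal 3 2 isT).

Definition GF (st1 st2 st3 : seq nat -> nat) (P : seq nat -> bool) : fps Rz :=
  fun n => \sum_(p : 'S_n | P (word p))
             z1 ^+ st1 (word p) * z2 ^+ st2 (word p) * z3 ^+ st3 (word p).

Definition allsep (w : seq nat) : bool := separableb w.
Definition redsep (w : seq nat) : bool := separableb w && reducible w.
Definition irrsep (w : seq nat) : bool := separableb w && irreducible w.

Definition Sgf (z : Rz) : fps Rz :=
  fun n => \sum_(p : 'S_n | separableb (word p)) z ^+ rmax (word p).

Definition S1 := Sgf z1.
Definition S2 := Sgf z2.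
Definition S3 := Sgf z3.

Definition Tz : fps Rz := fmono (z1 * z2 * z3) 1.

Definition Egf : fps Rz :=
  fadd Tz
    (fdiv (fmul (fmul (fmul (fadd S1 (fone _)) (fadd S2 (fone _))) (fadd S3 (fone _)))
                (fmono (z1 ^+ 2 * z2 * z3) 2))
          (fmul (fsub (fone _) (fmul S1 S3)) (fsub (fone _) (fmul S1 S2)))).

Definition Agf : fps Rz :=
  fmul S2 (fadd (fmono z3 1) (fdiv (fmul S3 S3) (fadd S3 (fone _)))).

Definition Tz23 : fps Rz := fmono (z2 * z3) 1.

Definition Dgf : fps Rz := fsub (fsub (fone _) Agf) Tz23.

Definition Fgf : fps Rz :=
  fdiv (fadd Tz (fmul (fadd Agf Tz23) (fsub Egf Tz))) Dgf.

(* A separable permutation of length at least 2 is a direct sum or a skew sum,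
   never both.  Cutting a direct sum at its first cut writes it uniquely as
   [a (+) b] with [a] sum-irreducible and [b] separable; the complement
   [x |-> n + 1 - x] exchanges direct and skew sums, so skew sums decompose
   dually.  Each of lmax, lmin, rmax, rmin is additive over such a
   decomposition or is inherited from one factor, hence every generating
   function weighted by a monomial in these statistics is a product of two
   other such generating functions.  This gives a polynomial system in the ring
   of power series in [t] over [Q[z1,z2,z3]], whose solution is forced by
   uniqueness of the series [X] with [X = (a + v X) (1 + X)] when
   [a(0) = v(0) = 0].  Solving it gives the series for the triples
   (lmax, rmax, lmin) and (rmin, rmax, lmin); the complement maps the other two
   triples to these and reducible to skew-reducible permutations. *)

From Pilot Require Import Defs.
From HB Require Import structures.
From mathcomp Require Import all_boot all_order all_algebra all_fingroup.
From mathcomp Require Import mpoly.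
From mathcomp Require Import boolp zify ring.
From Stdlib Require Import ClassicalEpsilon.

Set Implicit Arguments.
Unset Strict Implicit.
Unset Printing Implicit Defensive.
Import GRing.Theory.

(** * Permutation words and their sum decompositions *)

Definition pword n (w : seq nat) := perm_eq w (iota 1 n).
Definition pwords n := permutations (iota 1 n).

Definition sum_cut k (w : seq nat) :=
  all (fun a => all (fun b => a < b) (drop k w)) (take k w).
Definition skew_cut k (w : seq nat) :=
  all (fun a => all (fun b => b < a) (drop k w)) (take k w).
Definition skew_reducible (w : seq nat) : bool :=
  (2 <= size w) && has (skew_cut^~ w) (iota 1 (size w).-1).

Definition drop_down k (w : seq nat) := [seq x - k | x <- drop k w].
Definition compl (w : seq nat) := [seq (size w).+1 - x | x <- w].

Section PermutationWords.

Implicit Types (a b p s w : seq nat).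

Lemma pwordP n w :
  pword n w = [&& uniq w, size w == n & all (fun x => 0 < x <= n) w].
Proof.
apply/idP/idP.
- move=> pw; rewrite (perm_uniq pw) iota_uniq (perm_size pw) size_iota eqxx /=.
  rewrite (perm_all _ pw); apply/allP => x; rewrite mem_iota; lia.
- case/and3P => u /eqP s /allP a.
  have sub : {subset w <= iota 1 n} by move=> x /a; rewrite mem_iota; lia.
  have sz : size (iota 1 n) <= size w by rewrite size_iota s.
  by apply: uniq_perm => //; [exact: iota_uniq | case: (uniq_min_size u sub sz)].
Qed.

Lemma pword_size n w : pword n w -> size w = n.
Proof. by rewrite pwordP => /and3P [_ /eqP]. Qed.

Lemma pword_uniq n w : pword n w -> uniq w.
Proof. by rewrite pwordP => /and3P []. Qed.

Lemma pword_mem n w x : pword n w -> x \in w -> 0 < x <= n.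
Proof. by rewrite pwordP => /and3P [_ _ /allP]; apply. Qed.

Lemma mem_pwords n w : (w \in pwords n) = pword n w.
Proof. exact: mem_permutations. Qed.

Lemma pwords_uniq n : uniq (pwords n).
Proof. exact: permutations_uniq. Qed.

Lemma pword_dsum a b : pword (size a) a -> pword (size b) b ->
  pword (size a + size b) (dsum a b).
Proof.
move=> pa pb; rewrite pwordP /dsum size_cat size_map eqxx all_cat cat_uniq.
rewrite (pword_uniq pa) (map_inj_uniq (@addIn _)) (pword_uniq pb) /= ?andbT.
apply/and3P; split.
- apply/hasPn => y /mapP [x xb ->]; apply/negP => ya.
  by have := pword_mem pa ya; have := pword_mem pb xb; lia.
- by apply/allP => x xa; have := pword_mem pa xa; lia.
- by apply/allP => y /mapP [x xb ->]; have := pword_mem pb xb; lia.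
Qed.

Lemma pword_dskew a b : pword (size a) a -> pword (size b) b ->
  pword (size a + size b) (dskew a b).
Proof.
move=> pa pb; rewrite pwordP /dskew size_cat size_map eqxx all_cat cat_uniq.
rewrite (pword_uniq pb) (map_inj_uniq (@addIn _)) (pword_uniq pa) /= ?andbT.
apply/and3P; split.
- apply/hasPn => y yb; apply/negP => /mapP [x xa ey].
  by have := pword_mem pa xa; have := pword_mem pb yb; lia.
- by apply/allP => y /mapP [x xa ->]; have := pword_mem pa xa; lia.
- by apply/allP => x xb; have := pword_mem pb xb; lia.
Qed.

Lemma separable_pword w : separable w -> pword (size w) w /\ 0 < size w.
Proof.
elim => [|p s _ [pp p0] _ [ps s0]|p s _ [pp p0] _ [ps s0]] //.
- by rewrite /dsum size_cat size_map; split; [exact: pword_dsum | lia].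
- by rewrite /dskew size_cat size_map; split; [exact: pword_dskew | lia].
Qed.

Lemma separableP w : reflect (separable w) (separableb w).
Proof.
rewrite /separableb /Defs.decP.
by destruct (excluded_middle_informative (separable w)); constructor.
Qed.

Lemma separableb_nil : separableb [::] = false.
Proof. by apply/separableP => /separable_pword []. Qed.

Lemma dsum_lt a b x y : pword (size a) a -> pword (size b) b ->
  x \in a -> y \in [seq z + size a | z <- b] -> x < y.
Proof.
move=> pa pb xa /mapP [z zb ->].
by have := pword_mem pa xa; have := pword_mem pb zb; lia.
Qed.

Lemma dskew_gt a b x y : pword (size a) a -> pword (size b) b ->
  x \in [seq z + size b | z <- a] -> y \in b -> y < x.
Proof.
move=> pa pb /mapP [z za ->] yb.
by have := pword_mem pa za; have := pword_mem pb yb; lia.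
Qed.

Lemma take_dsum a b : take (size a) (dsum a b) = a.
Proof. exact: take_size_cat. Qed.

Lemma drop_down_dsum a b : drop_down (size a) (dsum a b) = b.
Proof.
rewrite /drop_down /dsum drop_size_cat // -map_comp -[RHS]map_id.
by apply: eq_map => x /=; rewrite addnK.
Qed.

Lemma dsum_inj a b a' b' :
  size a = size a' -> dsum a b = dsum a' b' -> a = a' /\ b = b'.
Proof.
move=> eq_size eq_dsum.
have ea : a = a' by rewrite -(take_dsum a b) eq_dsum eq_size take_dsum.
by split => //; rewrite -(drop_down_dsum a b) eq_dsum ea drop_down_dsum.
Qed.

Lemma sum_cut_dsum a b : pword (size a) a -> pword (size b) b ->
  sum_cut (size a) (dsum a b).
Proof.
move=> pa pb; rewrite /sum_cut take_dsum /dsum drop_size_cat //.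
by apply/allP => x xa; apply/allP => y; apply: dsum_lt.
Qed.

Lemma skew_cut_dskew a b : pword (size a) a -> pword (size b) b ->
  skew_cut (size a) (dskew a b).
Proof.
move=> pa pb; rewrite /skew_cut /dskew take_size_cat ?size_map //.
rewrite drop_size_cat ?size_map //.
by apply/allP => x xa; apply/allP => y yb; apply: dskew_gt pa pb xa yb.
Qed.

Lemma sum_cut_decomp n k w : pword n w -> k <= n -> sum_cut k w ->
  [/\ pword k (take k w), pword (n - k) (drop_down k w)
    & w = dsum (take k w) (drop_down k w)].
Proof.
move=> pw kn cut.
have sw := pword_size pw; have uw := pword_uniq pw.
have ut : uniq (take k w) by apply: take_uniq.
have ud : uniq (drop k w) by apply: drop_uniq.
have st : size (take k w) = k by rewrite size_takel ?sw.
have sd : size (drop k w) = n - k by rewrite size_drop sw.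
have lt x y : x \in take k w -> y \in drop k w -> x < y.
  by move=> xt yd; move/allP: cut => /(_ x xt) /allP /(_ y yd).
(* A prefix entry lies below the [n - k] distinct suffix entries, so it is at
   most [k]; dually every suffix entry exceeds [k]. *)
have bt x : x \in take k w -> 0 < x <= k.
  move=> xt; have /andP [x0 xn] := pword_mem pw (mem_take xt); rewrite x0 /=.
  have sub : {subset drop k w <= iota x.+1 (n - x)}.
    move=> y yd; rewrite mem_iota.
    by have := lt _ _ xt yd; have := pword_mem pw (mem_drop yd); lia.
  by have := uniq_leq_size ud sub; rewrite size_iota sd; lia.
have bd y : y \in drop k w -> k < y <= n.
  move=> yd; have /andP [y0 yn] := pword_mem pw (mem_drop yd); rewrite yn andbT.
  have sub : {subset take k w <= iota 1 y.-1}.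
    by move=> x xt; rewrite mem_iota; have := lt _ _ xt yd; have := bt _ xt; lia.
  by have := uniq_leq_size ut sub; rewrite size_iota st; lia.
split.
- by rewrite pwordP ut st eqxx /=; apply/allP => x /bt; lia.
- rewrite pwordP /drop_down size_map sd eqxx /=; apply/andP; split.
    rewrite map_inj_in_uniq // => x y xd yd.
    by have := bd _ xd; have := bd _ yd; lia.
  by apply/allP => z /mapP [y /bd yd ->]; lia.
- rewrite /dsum /drop_down st -map_comp -{1}(cat_take_drop k w); congr (_ ++ _).
  by rewrite -[LHS]map_id; apply/eq_in_map => y /bd /=; lia.
Qed.

End PermutationWords.

Section SumCuts.

Implicit Types (a b p s w : seq nat).

Lemma first_last_cut k w : 0 < k < size w ->
  nth 0 w 0 \in take k w /\ nth 0 w (size w).-1 \in drop k w.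
Proof.
move=> /andP [k0 kw]; split.
- by rewrite -(nth_take _ k0) mem_nth // size_take kw.
- have -> : (size w).-1 = k + ((size w).-1 - k) by lia.
  rewrite -nth_drop mem_nth // size_drop; move: kw; case: (size w) => //= m; lia.
Qed.

Lemma sum_skew_cut_excl k j w : 0 < k < size w -> 0 < j < size w ->
  sum_cut k w -> skew_cut j w -> False.
Proof.
move=> /first_last_cut [f1 l1] /first_last_cut [f2 l2] cut scut.
move/allP: cut => /(_ _ f1) /allP /(_ _ l1).
by move/allP: scut => /(_ _ f2) /allP /(_ _ l2); lia.
Qed.

Lemma first_last_cat (u v : seq nat) : 0 < size u -> 0 < size v ->
  nth 0 (u ++ v) 0 \in u /\ nth 0 (u ++ v) (size (u ++ v)).-1 \in v.
Proof.
move=> u0 v0; rewrite !nth_cat u0 mem_nth // size_cat; split => //.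
have -> : (size u + size v).-1 < size u = false by lia.
by rewrite mem_nth //; move: v0; move: (size u) (size v); lia.
Qed.

Lemma no_sum_cut_dskew p s k : pword (size p) p -> pword (size s) s ->
  0 < size p -> 0 < size s -> 0 < k < size (dskew p s) -> ~~ sum_cut k (dskew p s).
Proof.
move=> pp ps p0 s0 /first_last_cut [f l]; apply/negP => /allP /(_ _ f) /allP /(_ _ l).
have [] := @first_last_cat [seq x + size s | x <- p] s; rewrite ?size_map //.
rewrite -/(dskew p s); set x := nth 0 _ 0; set y := nth 0 _ _ => xp ys.
by have := dskew_gt pp ps xp ys; lia.
Qed.

Lemma sum_cut_dsum_left p s k : k < size p ->
  sum_cut k (dsum p s) -> sum_cut k p /\ take k (dsum p s) = take k p /\
  drop_down k (dsum p s) = dsum (drop_down k p) s.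
Proof.
move=> lt cut; rewrite /dsum take_cat lt; split; last split => //.
  move: cut; rewrite /sum_cut take_cat drop_cat lt => /allP cut.
  by apply/allP => a ap; have := cut a ap; rewrite all_cat => /andP [].
rewrite /drop_down /dsum drop_cat lt map_cat size_map size_drop -map_comp.
by congr (_ ++ _); apply: eq_map => x /=; lia.
Qed.

Lemma sum_cut_dsum_right p s k : size p < k ->
  sum_cut k (dsum p s) -> sum_cut (k - size p) s /\
  take k (dsum p s) = dsum p (take (k - size p) s) /\
  drop_down k (dsum p s) = drop_down (k - size p) s.
Proof.
move=> gt; rewrite /dsum /sum_cut /drop_down take_cat drop_cat ltnNge (ltnW gt) /=.
rewrite -map_take -map_drop all_cat => /andP [_ /allP cut].
split; last split => //.
- apply/allP => a ap; have := cut (a + size p) (map_f _ ap).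
  by rewrite all_map => /allP cut'; apply/allP => b /cut'; rewrite /= ltn_add2r.
- by rewrite -map_comp; apply: eq_map => x /=; lia.
Qed.

Lemma separable_sum_cut w k : separable w -> 0 < k < size w -> sum_cut k w ->
  separable (take k w) /\ separable (drop_down k w).
Proof.
move=> sw; elim: sw k => [|p s Sp IHp Ss IHs|p s Sp IHp Ss IHs] k hk cut.
- by move: hk => /=; lia.
- have [pp p0] := separable_pword Sp; have [ps s0] := separable_pword Ss.
  move: hk; rewrite /dsum size_cat size_map -/(dsum p s) => hk.
  case: (ltngtP k (size p)) => [lt|gt|->].
  + have [cutp [-> ->]] := sum_cut_dsum_left lt cut.
    have [S1 S2] := IHp k ltac:(lia) cutp.
    by split => //; apply: sep_sum.
  + have [cuts [-> ->]] := sum_cut_dsum_right gt cut.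
    have [S1 S2] := IHs (k - size p) ltac:(move: hk gt; lia) cuts.
    by split => //; apply: sep_sum.
  + by rewrite take_dsum drop_down_dsum.
- have [pp p0] := separable_pword Sp; have [ps s0] := separable_pword Ss.
  by move: cut; rewrite (negbTE (no_sum_cut_dskew pp ps p0 s0 hk)).
Qed.

Lemma separableb_sum_cut n k w : pword n w -> 0 < k < n -> sum_cut k w ->
  separableb w = separableb (take k w) && separableb (drop_down k w).
Proof.
move=> pw kn cut; have [_ _ ew] := sum_cut_decomp pw (ltnW (proj2 (andP kn))) cut.
apply/separableP/andP => [sep|[/separableP st /separableP sd]].
  have kw : 0 < k < size w by rewrite (pword_size pw).
  by have [/separableP ? /separableP ?] := separable_sum_cut sep kw cut.
by rewrite ew; apply: sep_sum.
Qed.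

End SumCuts.

Section Reducibility.

Implicit Types (p s w : seq nat).

Lemma reducibleP w :
  reflect (exists k, 0 < k < size w /\ sum_cut k w) (reducible w).
Proof.
apply: (iffP andP) => [[w2 /hasP [k]]|[k [kw cut]]].
  by rewrite mem_iota => kr cut; exists k; split => //; move: kr w2; rewrite -subn1; lia.
split; first by lia.
by apply/hasP; exists k => //; rewrite mem_iota; move: kw; rewrite -subn1; lia.
Qed.

Lemma skew_reducibleP w :
  reflect (exists k, 0 < k < size w /\ skew_cut k w) (skew_reducible w).
Proof.
apply: (iffP andP) => [[w2 /hasP [k]]|[k [kw cut]]].
  by rewrite mem_iota => kr cut; exists k; split => //; move: kr w2; rewrite -subn1; lia.
split; first by lia.
by apply/hasP; exists k => //; rewrite mem_iota; move: kw; rewrite -subn1; lia.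
Qed.

Lemma reducible_skew_reducible_excl w : reducible w -> skew_reducible w -> False.
Proof.
move=> /reducibleP [k [kw cut]] /skew_reducibleP [j [jw scut]].
exact: sum_skew_cut_excl kw jw cut scut.
Qed.

Lemma separable_cases w : separable w ->
  [\/ w = [:: 1], reducible w /\ ~~ skew_reducible w
    | skew_reducible w /\ ~~ reducible w].
Proof.
case => [|p s Sp Ss|p s Sp Ss]; first by constructor 1.
- have [pp p0] := separable_pword Sp; have [ps s0] := separable_pword Ss.
  have red : reducible (dsum p s).
    apply/reducibleP; exists (size p); rewrite /dsum size_cat size_map.
    by split; [lia | exact: sum_cut_dsum].
  by constructor 2; split => //; apply/negP => /(reducible_skew_reducible_excl red).
- have [pp p0] := separable_pword Sp; have [ps s0] := separable_pword Ss.
  have red : skew_reducible (dskew p s).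
    apply/skew_reducibleP; exists (size p); rewrite /dskew size_cat size_map.
    by split; [lia | exact: skew_cut_dskew].
  by constructor 3; split => //; apply/negP => /reducible_skew_reducible_excl; apply.
Qed.

Lemma sum_cut_take j k w : j < k -> sum_cut j w -> sum_cut j (take k w).
Proof.
move=> jk /allP cut; rewrite /sum_cut take_takel ?(ltnW jk) //; apply/allP => a aj.
apply/allP => y; rewrite -(subnK (ltnW jk)) -take_drop => /mem_take.
exact/allP/cut.
Qed.

Lemma sum_cut_take_inv j k w : j < k <= size w ->
  sum_cut k w -> sum_cut j (take k w) -> sum_cut j w.
Proof.
move=> /andP [jk kw] cutk cutj; apply/allP => a aj.
have ak : a \in take k w.
  by move: aj; rewrite -(take_takel w (ltnW jk)); apply: mem_take.
rewrite -(cat_take_drop k w) drop_cat size_takel // jk all_cat; apply/andP; split.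
- by move: cutj; rewrite /sum_cut take_takel ?(ltnW jk) // => /allP; apply.
- by move/allP: cutk; apply.
Qed.

Lemma exists_first_sum_cut w k : 0 < k < size w -> sum_cut k w ->
  exists j, [/\ 0 < j <= k, sum_cut j w & ~~ reducible (take j w)].
Proof.
elim: k {-2}k (leqnn k) => [|n IH] k kn kw cut; first by lia.
case red: (reducible (take k w)); last by exists k; rewrite red; split => //; lia.
have sk : size (take k w) = k by rewrite size_takel //; lia.
move: red => /reducibleP [j []]; rewrite sk => jk cutj.
have cutjw : sum_cut j w by apply: (sum_cut_take_inv (k := k)) => //; lia.
have [i [ij cuti redi]] := IH j ltac:(lia) ltac:(lia) cutjw.
by exists i; split => //; lia.
Qed.

Lemma first_sum_cut_unique w j k : 0 < j <= size w -> 0 < k <= size w ->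
  sum_cut j w -> sum_cut k w ->
  ~~ reducible (take j w) -> ~~ reducible (take k w) -> j = k.
Proof.
move=> jw kw cutj cutk redj redk.
case: (ltngtP j k) => // jk; exfalso.
- move/reducibleP: redk; apply; exists j; rewrite size_take_min.
  by split; [lia | exact: sum_cut_take].
- move/reducibleP: redj; apply; exists k; rewrite size_take_min.
  by split; [lia | exact: sum_cut_take].
Qed.

End Reducibility.

(** * Records *)

Definition lrecords (r : rel nat) (w : seq nat) :=
  count (fun i => all (fun j => r (nth 0 w j) (nth 0 w i)) (iota 0 i))
        (iota 0 (size w)).
Definition rrecords (r : rel nat) (w : seq nat) :=
  count (fun i => all (fun j => r (nth 0 w j) (nth 0 w i)) (iota i.+1 (size w - i.+1)))
        (iota 0 (size w)).

Section Records.

Implicit Types (r : rel nat) (u v w : seq nat).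

Lemma lmaxE w : lmax w = lrecords (fun a x => a < x) w. Proof. by []. Qed.
Lemma lminE w : lmin w = lrecords (fun a x => x < a) w. Proof. by []. Qed.
Lemma rmaxE w : rmax w = rrecords (fun a x => a < x) w. Proof. by []. Qed.
Lemma rminE w : rmin w = rrecords (fun a x => x < a) w. Proof. by []. Qed.

Lemma all_iota_nth (P : pred nat) w :
  all (fun j => P (nth 0 w j)) (iota 0 (size w)) = all P w.
Proof. by rewrite -[in RHS](mkseq_nth 0 w) all_map. Qed.

Lemma lrecords_rcons r w x :
  lrecords r (rcons w x) = lrecords r w + all (r^~ x) w.
Proof.
rewrite /lrecords size_rcons -addn1 iotaD add0n count_cat /= addn0; congr (_ + _).
- apply: eq_in_count => i; rewrite mem_iota add0n => /andP [_ iw].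
  apply: eq_in_all => j; rewrite mem_iota add0n => /andP [_ ji].
  by rewrite !nth_rcons iw (ltn_trans ji iw).
- rewrite nth_rcons ltnn eqxx -(all_iota_nth (r^~ x)); congr nat_of_bool.
  by apply: eq_in_all => j; rewrite mem_iota add0n => /andP [_ ji]; rewrite nth_rcons ji.
Qed.

Lemma rrecords_cons r x w :
  rrecords r (x :: w) = rrecords r w + all (r^~ x) w.
Proof.
rewrite /rrecords /= addnC; congr (_ + _).
- rewrite -(addn0 1) iotaDl count_map; apply: eq_in_count => i /= _.
  by rewrite -(add1n i.+1) iotaDl all_map.
- rewrite subn1 /= -(all_iota_nth (r^~ x)); congr nat_of_bool.
  by rewrite -(addn0 1) iotaDl all_map.
Qed.

Lemma lrecords_cat r u v : {in u & v, forall a b, r a b} ->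
  lrecords r (u ++ v) = lrecords r u + lrecords r v.
Proof.
elim/last_ind: v => [|v x IH] ruv; first by rewrite cats0 addn0.
rewrite -rcons_cat !lrecords_rcons IH; last first.
  by move=> a b au bv; apply: ruv; rewrite // mem_rcons inE bv orbT.
rewrite all_cat.
have -> : all (r^~ x) u by apply/allP => a au; apply: ruv; rewrite // mem_rcons mem_head.
by rewrite addnA.
Qed.

Lemma lrecords_cat_dom r u v : {in u & v, forall a b, ~~ r a b} -> 0 < size u ->
  lrecords r (u ++ v) = lrecords r u.
Proof.
case: u => // a0 u nruv _.
elim/last_ind: v nruv => [|v x IH] nruv; first by rewrite cats0.
rewrite -rcons_cat !lrecords_rcons IH; last first.
  by move=> a b au bv; apply: nruv; rewrite // mem_rcons inE bv orbT.
have xv : x \in rcons v x by rewrite mem_rcons mem_head.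
by rewrite /= (negbTE (nruv _ _ (mem_head _ _) xv)) addn0.
Qed.

Lemma rrecords_cat r u v : {in u & v, forall a b, r b a} ->
  rrecords r (u ++ v) = rrecords r u + rrecords r v.
Proof.
elim: u => [|x u IH] ruv //=.
rewrite !rrecords_cons IH; last by move=> a b au bv; apply: ruv; rewrite // inE au orbT.
rewrite all_cat.
have -> : all (r^~ x) v by apply/allP => b bv; apply: ruv; rewrite // mem_head.
by rewrite andbT addnAC.
Qed.

Lemma rrecords_cat_dom r u v : {in u & v, forall a b, ~~ r b a} -> 0 < size v ->
  rrecords r (u ++ v) = rrecords r v.
Proof.
case: v => // b0 v nruv _.
elim: u nruv => [|x u IH] nruv //=.
rewrite rrecords_cons IH; last by move=> a b au bv; apply: nruv; rewrite // inE au orbT.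
by rewrite all_cat /= (negbTE (nruv _ _ (mem_head _ _) (mem_head _ _))) /= andbF addn0.
Qed.

Lemma lrecords_map r r' f w : {in w &, forall a b, r (f a) (f b) = r' a b} ->
  lrecords r (map f w) = lrecords r' w.
Proof.
elim/last_ind: w => [|w x IH] rf //.
rewrite map_rcons !lrecords_rcons IH; last first.
  by move=> a b au bv; apply: rf; rewrite mem_rcons inE ?au ?bv orbT.
rewrite all_map; congr (_ + nat_of_bool _); apply: eq_in_all => a aw /=.
by apply: rf; rewrite mem_rcons inE ?aw ?eqxx ?orbT.
Qed.

Lemma rrecords_map r r' f w : {in w &, forall a b, r (f a) (f b) = r' a b} ->
  rrecords r (map f w) = rrecords r' w.
Proof.
elim: w => [|x w IH] rf //.
rewrite map_cons !rrecords_cons IH; last first.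
  by move=> a b au bv; apply: rf; rewrite inE ?au ?bv orbT.
rewrite all_map; congr (_ + nat_of_bool _); apply: eq_in_all => a aw /=.
by apply: rf; rewrite inE ?aw ?eqxx ?orbT.
Qed.

End Records.

Section SumStatistics.

Variables a b : seq nat.
Hypotheses (pa : pword (size a) a) (pb : pword (size b) b).
Hypotheses (a0 : 0 < size a) (b0 : 0 < size b).

Let lt_ab x y : x \in a -> y \in [seq z + size a | z <- b] -> x < y.
Proof. exact: dsum_lt. Qed.
Let gt_ab x y : x \in [seq z + size b | z <- a] -> y \in b -> y < x.
Proof. exact: dskew_gt. Qed.

Let lrecords_shift r k w : (forall x y, r (x + k) (y + k) = r x y) ->
  lrecords r [seq z + k | z <- w] = lrecords r w.
Proof. by move=> rk; apply: lrecords_map => x y _ _. Qed.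
Let rrecords_shift r k w : (forall x y, r (x + k) (y + k) = r x y) ->
  rrecords r [seq z + k | z <- w] = rrecords r w.
Proof. by move=> rk; apply: rrecords_map => x y _ _. Qed.

Lemma lmax_dsum : lmax (dsum a b) = lmax a + lmax b.
Proof.
by rewrite !lmaxE lrecords_cat ?lrecords_shift // => x y; rewrite ltn_add2r.
Qed.

Lemma lmin_dsum : lmin (dsum a b) = lmin a.
Proof.
by rewrite !lminE lrecords_cat_dom // => x y xa yb; rewrite -leqNgt ltnW ?lt_ab.
Qed.

Lemma rmax_dsum : rmax (dsum a b) = rmax b.
Proof.
rewrite !rmaxE rrecords_cat_dom ?rrecords_shift ?size_map // => [x y|x y xa yb].
  by rewrite ltn_add2r.
by rewrite -leqNgt ltnW ?lt_ab.
Qed.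

Lemma rmin_dsum : rmin (dsum a b) = rmin a + rmin b.
Proof.
by rewrite !rminE rrecords_cat ?rrecords_shift // => x y; rewrite ltn_add2r.
Qed.

Lemma lmax_dskew : lmax (dskew a b) = lmax a.
Proof.
rewrite !lmaxE lrecords_cat_dom ?lrecords_shift ?size_map // => [x y|x y xa yb].
  by rewrite ltn_add2r.
by rewrite -leqNgt ltnW ?gt_ab.
Qed.

Lemma lmin_dskew : lmin (dskew a b) = lmin a + lmin b.
Proof.
by rewrite !lminE lrecords_cat ?lrecords_shift // => x y; rewrite ltn_add2r.
Qed.

Lemma rmax_dskew : rmax (dskew a b) = rmax a + rmax b.
Proof.
by rewrite !rmaxE rrecords_cat ?rrecords_shift // => x y; rewrite ltn_add2r.
Qed.

Lemma rmin_dskew : rmin (dskew a b) = rmin b.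
Proof.
by rewrite !rminE rrecords_cat_dom // => x y xa yb; rewrite -leqNgt ltnW ?gt_ab.
Qed.

End SumStatistics.

(** * Complement *)

Section Complement.

Implicit Types (a b w : seq nat).

Lemma size_compl w : size (compl w) = size w.
Proof. exact: size_map. Qed.

Lemma compl_ltE n w : pword n w ->
  {in w &, forall x y, ((size w).+1 - x < (size w).+1 - y) = (y < x)}.
Proof.
move=> pw x y xw yw; have := pword_mem pw xw; have := pword_mem pw yw.
by rewrite (pword_size pw); lia.
Qed.

Lemma pword_compl n w : pword n w -> pword n (compl w).
Proof.
move=> pw; have sw := pword_size pw; rewrite pwordP size_compl sw eqxx /compl sw /=.
apply/andP; split.
- rewrite map_inj_in_uniq ?(pword_uniq pw) // => x y xw yw /=.
  by have := pword_mem pw xw; have := pword_mem pw yw; lia.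
- by apply/allP => z /mapP [x xw ->]; have := pword_mem pw xw; lia.
Qed.

Lemma complK n w : pword n w -> compl (compl w) = w.
Proof.
move=> pw; rewrite /compl size_map -map_comp (pword_size pw) -[RHS]map_id.
by apply/eq_in_map => x xw /=; have := pword_mem pw xw; lia.
Qed.

Lemma compl_dsum a b : pword (size a) a -> pword (size b) b ->
  compl (dsum a b) = dskew (compl a) (compl b).
Proof.
move=> pa pb; rewrite /compl /dsum /dskew size_cat !size_map map_cat -!map_comp.
congr (_ ++ _); apply/eq_in_map => x /= xab.
- by have := pword_mem pa xab; lia.
- by have := pword_mem pb xab; lia.
Qed.

Lemma compl_dskew a b : pword (size a) a -> pword (size b) b ->
  compl (dskew a b) = dsum (compl a) (compl b).
Proof.
move=> pa pb; rewrite /compl /dsum /dskew size_cat !size_map map_cat -!map_comp.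
congr (_ ++ _); apply/eq_in_map => x /= xab.
- by have := pword_mem pa xab; lia.
- by have := pword_mem pb xab; lia.
Qed.

Lemma separable_compl w : separable w -> separable (compl w).
Proof.
elim => [|p s Sp IHp Ss IHs|p s Sp IHp Ss IHs]; first exact: sep_one.
- have [pp _] := separable_pword Sp; have [ps _] := separable_pword Ss.
  by rewrite compl_dsum //; apply: sep_skew.
- have [pp _] := separable_pword Sp; have [ps _] := separable_pword Ss.
  by rewrite compl_dskew //; apply: sep_sum.
Qed.

Lemma separableb_compl n w : pword n w -> separableb (compl w) = separableb w.
Proof.
move=> pw; apply/separableP/separableP => [/separable_compl|]; last exact: separable_compl.
by rewrite (complK pw).
Qed.

Lemma lmax_compl n w : pword n w -> lmax (compl w) = lmin w.
Proof. by move=> pw; rewrite lmaxE lminE; apply: lrecords_map; apply: compl_ltE pw. Qed.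
Lemma lmin_compl n w : pword n w -> lmin (compl w) = lmax w.
Proof.
move=> pw; rewrite lmaxE lminE; apply: lrecords_map => x y xw yw.
exact: compl_ltE pw _ _ yw xw.
Qed.
Lemma rmax_compl n w : pword n w -> rmax (compl w) = rmin w.
Proof. by move=> pw; rewrite rmaxE rminE; apply: rrecords_map; apply: compl_ltE pw. Qed.
Lemma rmin_compl n w : pword n w -> rmin (compl w) = rmax w.
Proof.
move=> pw; rewrite rmaxE rminE; apply: rrecords_map => x y xw yw.
exact: compl_ltE pw _ _ yw xw.
Qed.

Lemma sum_cut_compl n k w : pword n w -> sum_cut k (compl w) = skew_cut k w.
Proof.
move=> pw; rewrite /sum_cut /skew_cut /compl -map_take -map_drop all_map.
apply: eq_in_all => x /mem_take xw /=; rewrite all_map.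
by apply: eq_in_all => y /mem_drop yw /=; apply: compl_ltE pw _ _ xw yw.
Qed.

Lemma skew_cut_compl n k w : pword n w -> skew_cut k (compl w) = sum_cut k w.
Proof.
move=> pw; rewrite /sum_cut /skew_cut /compl -map_take -map_drop all_map.
apply: eq_in_all => x /mem_take xw /=; rewrite all_map.
by apply: eq_in_all => y /mem_drop yw /=; apply: compl_ltE pw _ _ yw xw.
Qed.

Lemma reducible_compl n w : pword n w -> reducible (compl w) = skew_reducible w.
Proof.
move=> pw; rewrite /reducible /skew_reducible size_compl; congr (_ && _).
by apply: eq_has => k; apply: sum_cut_compl pw.
Qed.

Lemma skew_reducible_compl n w : pword n w -> skew_reducible (compl w) = reducible w.
Proof.
move=> pw; rewrite /reducible /skew_reducible size_compl; congr (_ && _).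
by apply: eq_has => k; apply: skew_cut_compl pw.
Qed.

End Complement.


(** * Formal power series *)

HB.instance Definition _ (R : comNzRingType) := gen_eqMixin (fps R).
HB.instance Definition _ (R : comNzRingType) := gen_choiceMixin (fps R).

Section SeriesRing.

Variable R : comNzRingType.
Implicit Types (f g h : fps R) (c d : R).
Local Open Scope ring_scope.

Definition fzero : fps R := fun _ => 0.

Lemma faddA : associative (@fadd R).
Proof. by move=> f g h; apply/funext => n; apply: addrA. Qed.
Lemma faddC : commutative (@fadd R).
Proof. by move=> f g; apply/funext => n; apply: addrC. Qed.
Lemma fadd0 : left_id fzero (@fadd R).
Proof. by move=> f; apply/funext => n; apply: add0r. Qed.
Lemma faddN : left_inverse fzero (@fopp R) (@fadd R).
Proof. by move=> f; apply/funext => n; apply: addNr. Qed.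

HB.instance Definition _ := GRing.isZmodule.Build (fps R) faddA faddC fadd0 faddN.

(* The Cauchy product inherits associativity and commutativity from [{poly R}]:
   the coefficient of [t^n] only depends on truncations at degree [n]. *)
Definition truncation n f : {poly R} := \poly_(i < n.+1) f i.

Lemma coef_truncation n m f : (n <= m)%N -> (truncation m f)`_n = f n.
Proof. by move=> le; rewrite coef_poly ltnS le. Qed.

Lemma fmul_truncation n m f g : (n <= m)%N ->
  fmul f g n = (truncation m f * truncation m g)`_n.
Proof.
move=> le; rewrite coefM; apply: eq_bigr => i _.
have hi : (i <= m)%N by rewrite -ltnS (leq_trans (ltn_ord i)).
by rewrite !coef_truncation // (leq_trans (leq_subr _ _) le).
Qed.

Lemma fmulA : associative (@fmul R).
Proof.
move=> f g h; apply/funext => n.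
have -> : fmul f (fmul g h) n = (truncation n f * (truncation n g * truncation n h))`_n.
  rewrite coefM; apply: eq_bigr => i _.
  by rewrite coef_truncation -?fmul_truncation ?leq_subr // -ltnS.
have -> : fmul (fmul f g) h n = (truncation n f * truncation n g * truncation n h)`_n.
  rewrite coefM; apply: eq_bigr => i _.
  by rewrite (coef_truncation h (leq_subr _ _)) -fmul_truncation // -ltnS.
by rewrite mulrA.
Qed.

Lemma fmulC : commutative (@fmul R).
Proof.
by move=> f g; apply/funext => n; rewrite !(fmul_truncation _ _ (leqnn n)) mulrC.
Qed.

Lemma fmul1 : left_id (fone R) (@fmul R).
Proof.
move=> f; apply/funext => n; rewrite /fmul big_ord_recl /= /fone /fmono /= mul1r subn0.
by rewrite big1 ?addr0 // => i _; rewrite mul0r.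
Qed.

Lemma fmulDl : left_distributive (@fmul R) (@fadd R).
Proof.
move=> f g h; apply/funext => n; rewrite /fmul /fadd -big_split /=.
by apply: eq_bigr => i _; rewrite mulrDl.
Qed.

Lemma fone_neq0 : fone R != fzero.
Proof. by apply/eqP => /(congr1 (fun f => f 0%N)) /eqP; rewrite oner_eq0. Qed.

HB.instance Definition _ :=
  GRing.Zmodule_isComNzRing.Build (fps R) fmulA fmulC fmul1 fmulDl fone_neq0.

Lemma faddE f g : fadd f g = f + g. Proof. by []. Qed.
Lemma fsubE f g : fsub f g = f - g. Proof. by []. Qed.
Lemma foppE f : fopp f = - f. Proof. by []. Qed.
Lemma fmulE f g : fmul f g = f * g. Proof. by []. Qed.

Lemma fcoefD f g n : (f + g) n = f n + g n. Proof. by []. Qed.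
Lemma fcoefN f n : (- f) n = - f n. Proof. by []. Qed.
Lemma fcoefM0 f g : (f * g) 0%N = f 0%N * g 0%N.
Proof. exact: big_ord1. Qed.

Lemma fps_fixpoint0 h k : k 0%N = 0 -> h = h * k -> h = 0.
Proof.
move=> k0 hk; apply/funext => n; elim: n {-2}n (leqnn n) => [|n IH] m.
  by rewrite leqn0 => /eqP ->; rewrite hk fcoefM0 k0 mulr0.
move=> le; rewrite hk /GRing.mul /= /fmul big_ord_recr /= subnn k0 mulr0 addr0.
by rewrite big1 // => i _; rewrite IH ?mul0r // -ltnS (leq_trans (ltn_ord i)).
Qed.

Definition fC c : fps R := fmono c 0.
Definition fX : fps R := fmono 1 1.

Lemma fmonoM c d i j : fmono c i * fmono d j = fmono (c * d) (i + j).
Proof.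
apply/funext => n; rewrite /GRing.mul /= /fmul /fmono.
case: (leqP i n) => [le|lt].
- rewrite (bigD1 (Ordinal (le : (i < n.+1)%N))) //= big1 ?addr0.
    have -> : ((n - i)%N == j) = (n == (i + j)%N) by rewrite -(eqn_add2l i) subnKC.
    by rewrite eqxx; case: eqP => _; rewrite ?mulr0.
  by move=> k /negbTE; rewrite -val_eqE /= => ->; rewrite mul0r.
- have -> : (n == i + j) = false.
    by apply/negbTE; rewrite neq_ltn (leq_trans lt (leq_addr _ _)).
  apply: big1 => k _; case: eqP => [ek|]; last by rewrite mul0r.
  by move: lt; rewrite -ek -ltnS => /(leq_trans (ltn_ord k)); rewrite ltnn.
Qed.

Lemma fmonoE c k : fmono c k = fC c * fX ^+ k.
Proof.
elim: k => [|k IH]; first by rewrite expr0 mulr1.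
by rewrite exprS mulrCA -IH /fX fmonoM mul1r.
Qed.

Lemma fCM c d : fC (c * d) = fC c * fC d.
Proof. by rewrite /fC fmonoM. Qed.

Lemma fC1 : fC 1 = 1. Proof. by []. Qed.
Lemma fX0 : fX 0%N = 0. Proof. by []. Qed.

End SeriesRing.

Section SeriesInverse.

Variable R : comUnitRingType.
Implicit Types (f g x y : fps R).
Local Open Scope ring_scope.

Lemma size_finv_seq f n : size (finv_seq f n) = n.+1.
Proof. by elim: n => [|n IH] //=; rewrite size_rcons IH. Qed.

Lemma nth_finv_seq f n i : (i <= n)%N -> nth 0 (finv_seq f n) i = Defs.finv f i.
Proof.
elim: n => [|n IH] le; first by move: le; rewrite leqn0 => /eqP ->.
rewrite /= nth_rcons size_finv_seq; case: ltnP => [lt|ge]; first by rewrite IH.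
have -> : i = n.+1 by apply/eqP; rewrite eqn_leq le ge.
by rewrite eqxx /Defs.finv /= nth_rcons size_finv_seq ltnn eqxx.
Qed.

Lemma finvS f m :
  Defs.finv f m.+1 = - (f 0%N)^-1 * \sum_(i < m.+1) f i.+1 * Defs.finv f (m - i)%N.
Proof.
rewrite {1}/Defs.finv /= nth_rcons size_finv_seq ltnn eqxx; congr (_ * _).
by apply: eq_bigr => i _; rewrite nth_finv_seq // leq_subr.
Qed.

Lemma fmulV f : f 0%N \is a GRing.unit -> f * Defs.finv f = 1.
Proof.
move=> f0; apply/funext => [[|m]].
  by rewrite fcoefM0 /Defs.finv /= divrr.
rewrite /GRing.mul /= /fmul big_ord_recl /= finvS mulrA mulrN divrr // mulN1r.
by under [X in _ + X]eq_bigr => i _ do rewrite /bump /= add1n subSS; rewrite addNr.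
Qed.

(* The equation is typed in the ring [fps R] seen through [comNzRingType], where
   [ring] finds its instance. *)
Lemma fdiv_eq f x y : f 0%N \is a GRing.unit -> x = y * f ->
  y = fdiv x f :> fps (R : comNzRingType).
Proof. by move=> f0 ->; rewrite /fdiv fmulE -mulrA fmulV // mulr1. Qed.

End SeriesInverse.

(** * Generating functions of classes of permutation words *)

Lemma perm_dsum_pwords i m :
  perm_eq [seq dsum a b | a <- pwords i, b <- pwords m]
          [seq w <- pwords (i + m) | sum_cut i w].
Proof.
apply: uniq_perm; last 1 first.
- move=> w; rewrite mem_filter; apply/allpairsP/andP => [[[a b] [/= ai bm ->]]|].
    rewrite mem_pwords in ai; rewrite mem_pwords in bm.
    rewrite -{1}(pword_size ai) -(pword_size ai) -(pword_size bm) mem_pwords.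
    by split; [apply: sum_cut_dsum | apply: pword_dsum];
      rewrite ?(pword_size ai) ?(pword_size bm).
  rewrite mem_pwords => -[cut pw]; have [pa pb ->] := sum_cut_decomp pw (leq_addr m i) cut.
  by exists (take i w, drop_down i w); rewrite !mem_pwords pa -(addKn i m).
- apply: allpairs_uniq; rewrite ?pwords_uniq // => -[a b] [a' b'] /=.
  move=> /allpairsP [[x y] [/= xi _ [-> _]]] /allpairsP [[x' y'] [/= xi' _ [-> _]]].
  rewrite mem_pwords in xi; rewrite mem_pwords in xi'.
  by move/dsum_inj; rewrite (pword_size xi) (pword_size xi') => /(_ erefl) [-> ->].
- by rewrite filter_uniq // pwords_uniq.
Qed.

(* Equivalently, [i] is the least sum cut of [w]. *)
Definition first_sum_cut i (w : seq nat) :=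
  [&& 0 < i < size w, sum_cut i w & ~~ reducible (take i w)].

Section GeneratingFunctions.

Variable R : comNzRingType.
Implicit Types (P Q : pred (seq nat)) (F f g h : seq nat -> R).
Local Open Scope ring_scope.

Definition gf P f : fps R := fun n => \sum_(w <- pwords n | P w) f w.

Lemma sum_first_sum_cut n w (c : R) : pword n w ->
  \sum_(i < n.+1) (if separableb w && first_sum_cut i w then c else 0)
  = if separableb w && reducible w then c else 0.
Proof.
move=> pw; have sw := pword_size pw.
case: (boolP (separableb w && reducible w)) => [/andP [sep /reducibleP [k [kw cut]]]|nred].
- have [j [jk cutj redj]] := exists_first_sum_cut kw cut.
  have jn : (j < n.+1)%N by lia.
  rewrite (bigD1 (Ordinal jn)) //= big1 ?addr0.
    by rewrite sep /first_sum_cut cutj redj andbT; case: ifP => //; lia.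
  move=> i; rewrite -val_eqE /= => ij; case: ifP => // /andP [_ /and3P [iw cuti redi]].
  by move: ij; rewrite (first_sum_cut_unique _ _ cuti cutj redi redj) ?eqxx //; lia.
- apply: big1 => i _; case: ifP => // /andP [sep /and3P [iw cuti _]].
  by move: nred; rewrite sep /=; case/reducibleP; exists i.
Qed.

Lemma gf_first_cut_mul F g h n i : (i <= n)%N ->
  (forall a b, separable a -> separable b -> F (dsum a b) = g a * h b) ->
  (\sum_(a <- pwords i | separableb a && ~~ reducible a) g a) *
  (\sum_(b <- pwords (n - i) | separableb b) h b) =
  \sum_(w <- pwords n | separableb w && first_sum_cut i w) F w.
Proof.
move=> le Fgh; rewrite big_distrlr /=.
have [->|i0] := posnP i.
  rewrite /pwords /= big_cons big_nil separableb_nil /= big1 // => w.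
  by rewrite /first_sum_cut /= andbF.
have [lt|ge] := ltnP i n; last first.
  have -> : (n - i = 0)%N by lia.
  rewrite big1 => [|a _]; last by rewrite /pwords /= big_cons big_nil separableb_nil.
  symmetry; apply: big1_seq => w /andP [/andP [_ /and3P [iw _ _]]].
  by rewrite mem_pwords => /pword_size; lia.
pose G w := if [&& separableb (take i w), ~~ reducible (take i w)
                 & separableb (drop_down i w)] then F w else 0.
transitivity (\sum_(a <- pwords i) \sum_(b <- pwords (n - i)) G (dsum a b)).
  rewrite big_mkcond /=; apply: eq_big_seq => a; rewrite mem_pwords => pa.
  rewrite big_mkcond /= /G -(pword_size pa).
  case: (boolP (separableb a && ~~ reducible a)) => [/andP [sa ra]|nirr].
    apply: eq_bigr => b _; rewrite take_dsum drop_down_dsum sa ra /=.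
    by case: (boolP (separableb b)) => // sb; rewrite Fgh //; apply/separableP.
  rewrite big1 // => b _; rewrite take_dsum; move: nirr; rewrite negb_and negbK.
  by case: (separableb a) => //= ->.
rewrite -big_allpairs_dep (perm_big _ (perm_dsum_pwords _ _)) subnKC ?(ltnW lt) //.
rewrite big_filter [RHS]big_mkcond [LHS]big_mkcond; apply: eq_big_seq => w.
rewrite mem_pwords /first_sum_cut => pw; rewrite (pword_size pw).
case cut: (sum_cut i w) => /=; last by rewrite !andbF.
rewrite i0 lt /G (separableb_sum_cut pw _ cut) ?i0 ?lt //.
by case: (separableb (take i w)); case: (reducible _); case: (separableb _).
Qed.

Lemma gf_sum_mul F g h :
  (forall a b, separable a -> separable b -> F (dsum a b) = g a * h b) ->
  gf (fun w => separableb w && reducible w) F =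
  gf (fun w => separableb w && ~~ reducible w) g * gf separableb h.
Proof.
move=> Fgh; apply/funext => n; rewrite /GRing.mul /= /fmul /gf.
rewrite [RHS](eq_bigr (fun i : 'I_n.+1 => \sum_(w <- pwords n)
    (if separableb w && first_sum_cut i w then F w else 0))) => [|i _]; last first.
  by rewrite -big_mkcond; apply: gf_first_cut_mul; rewrite // -ltnS.
rewrite exchange_big big_mkcond /=; apply: eq_big_seq => w.
by rewrite mem_pwords => /sum_first_sum_cut ->.
Qed.

Lemma eq_gfl P Q f : (forall n w, pword n w -> P w = Q w) -> gf P f = gf Q f.
Proof.
move=> PQ; apply/funext => n; rewrite /gf big_seq_cond [RHS]big_seq_cond.
by apply: eq_bigl => w; case: (boolP (_ \in _)) => //; rewrite mem_pwords => /PQ ->.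
Qed.

Lemma gf_compl P f :
  gf P f = gf (fun w => P (compl w)) (fun w => f (compl w)).
Proof.
apply/funext => n; rewrite /gf.
have perm_compl : perm_eq (map compl (pwords n)) (pwords n).
  apply: uniq_perm; rewrite ?pwords_uniq //.
    rewrite map_inj_in_uniq ?pwords_uniq // => v w; rewrite !mem_pwords => pv pw e.
    by rewrite -(complK pv) e (complK pw).
  move=> w; apply/mapP/idP => [[v pv ->]|pw].
    by move: pv; rewrite !mem_pwords; apply: pword_compl.
  rewrite mem_pwords in pw; exists (compl w); first by rewrite mem_pwords pword_compl.
  by rewrite (complK pw).
by rewrite -(perm_big _ perm_compl) big_map.
Qed.

Lemma gf_skew_mul F g h :
  (forall a b, separable a -> separable b -> F (dskew a b) = g a * h b) ->
  gf (fun w => separableb w && skew_reducible w) F =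
  gf (fun w => separableb w && ~~ skew_reducible w) g * gf separableb h.
Proof.
move=> Fgh; rewrite gf_compl [gf _ g]gf_compl [gf _ h]gf_compl.
have Esep n w : pword n w -> separableb (compl w) = separableb w.
  exact: separableb_compl.
have Ered n w : pword n w ->
    separableb (compl w) && skew_reducible (compl w) = separableb w && reducible w.
  by move=> pw; rewrite (separableb_compl pw) (skew_reducible_compl pw).
have Eirr n w : pword n w ->
    separableb (compl w) && ~~ skew_reducible (compl w) = separableb w && ~~ reducible w.
  by move=> pw; rewrite (separableb_compl pw) (skew_reducible_compl pw).
rewrite (eq_gfl _ Ered) (eq_gfl _ Eirr) (eq_gfl _ Esep).
apply: gf_sum_mul => a b sa sb.
have [pa _] := separable_pword sa; have [pb _] := separable_pword sb.
by rewrite compl_dsum // Fgh //; apply: separable_compl.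
Qed.

Lemma gf_predU P Q f : (forall w, ~~ (P w && Q w)) ->
  gf (fun w => P w || Q w) f = gf P f + gf Q f.
Proof.
move=> PQ; apply/funext => n; rewrite fcoefD /gf big_mkcond [in RHS]big_mkcond.
rewrite [X in _ = _ + X]big_mkcond -big_split /=; apply: eq_bigr => w _.
by move: (PQ w); case: (P w); case: (Q w); rewrite ?addr0 ?add0r.
Qed.

Lemma gf_singleton f : gf (pred1 [:: 1%N]) f = fmono (f [:: 1%N]) 1.
Proof.
apply/funext => n; rewrite /gf /fmono; case: eqP => [->|ne].
  by rewrite /pwords /= big_cons big_nil eqxx addr0.
apply: big1_seq => w /andP [/eqP -> ]; rewrite mem_pwords => /pword_size /= e.
by case: ne.
Qed.

Lemma gf_coef0 P f : (forall w, P w -> separableb w) -> gf P f 0%N = 0.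
Proof.
move=> Psep; rewrite /gf /pwords /= big_cons big_nil.
by case: ifP => // /Psep; rewrite separableb_nil.
Qed.

Lemma separable_classes w : separableb w ->
  (w == [:: 1%N]) = ~~ reducible w && ~~ skew_reducible w /\
  ~~ (reducible w && skew_reducible w).
Proof.
move=> /separableP /separable_cases [->|[red nskew]|[skew nred]] //.
- by rewrite red (negbTE nskew); case: eqP => // w1; move: red; rewrite w1.
- by rewrite skew (negbTE nred); case: eqP => // w1; move: skew; rewrite w1.
Qed.

Lemma separableb1 : separableb [:: 1%N].
Proof. exact/separableP/sep_one. Qed.

Lemma separable_classes_excl w :
  ~~ ((w == [:: 1%N]) && (reducible w || skew_reducible w)) /\
  ~~ (reducible w && skew_reducible w).
Proof.
split; first by case: eqP => // ->.
by apply/negP => /andP [red skew]; apply: reducible_skew_reducible_excl red skew.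
Qed.

Lemma separable_classesE w :
  [/\ separableb w =
        [|| w == [:: 1%N], separableb w && reducible w | separableb w && skew_reducible w],
      separableb w && ~~ reducible w =
        (w == [:: 1%N]) || separableb w && skew_reducible w
    & separableb w && ~~ skew_reducible w =
        (w == [:: 1%N]) || separableb w && reducible w].
Proof.
case: (boolP (separableb w)) => [sep|nsep] /=.
  by have [-> excl] := separable_classes sep; move: excl;
    case: (reducible w); case: (skew_reducible w).
by case: eqP => // w1; move: nsep; rewrite w1 separableb1.
Qed.

Lemma gf_sep_split f : gf separableb f =
  gf (pred1 [:: 1%N]) f + gf (fun w => separableb w && reducible w) f +
  gf (fun w => separableb w && skew_reducible w) f.
Proof.
rewrite -!gf_predU => [|w|w].
- by apply: eq_gfl => n w _; case: (separable_classesE w); rewrite orbA.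
- by have [] := separable_classes_excl w; rewrite /=;
    case: eqP; case: (reducible w); case: (skew_reducible w); case: (separableb w).
- by have [] := separable_classes_excl w; rewrite /=;
    case: eqP; case: (reducible w); case: (skew_reducible w); case: (separableb w).
Qed.

Lemma gf_irr_split f : gf (fun w => separableb w && ~~ reducible w) f =
  gf (pred1 [:: 1%N]) f + gf (fun w => separableb w && skew_reducible w) f.
Proof.
rewrite -gf_predU => [|w]; first by apply: eq_gfl => n w _; case: (separable_classesE w).
by have [] := separable_classes_excl w; rewrite /=;
  case: eqP; case: (reducible w); case: (skew_reducible w); case: (separableb w).
Qed.

Lemma gf_skew_irr_split f : gf (fun w => separableb w && ~~ skew_reducible w) f =
  gf (pred1 [:: 1%N]) f + gf (fun w => separableb w && reducible w) f.
Proof.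
rewrite -gf_predU => [|w]; first by apply: eq_gfl => n w _; case: (separable_classesE w).
by have [] := separable_classes_excl w; rewrite /=;
  case: eqP; case: (reducible w); case: (skew_reducible w); case: (separableb w).
Qed.

Lemma word_inj n : injective (@word n).
Proof.
move=> p q e; apply/permP => i; apply/val_inj/succn_inj.
have := congr1 (fun s => nth 0%N s i) e.
by rewrite /word !(nth_map i) -?enumT ?size_enum_ord ?nth_ord_enum.
Qed.

Lemma pword_word n (p : 'S_n) : pword n (word p).
Proof.
rewrite pwordP /word size_map size_enum_ord eqxx /=; apply/andP; split.
- by rewrite map_inj_uniq ?enum_uniq // => i j /succn_inj /val_inj /perm_inj.
- by apply/allP => x /mapP [i _ ->]; rewrite ltn_ord.
Qed.

Lemma word_surj n w : pword n w -> exists p : 'S_n, word p = w.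
Proof.
case: n => [|n] pw; have sw := pword_size pw; have uw := pword_uniq pw.
  exists 1%g; move/size0nil: sw => ->.
  by apply/size0nil; rewrite size_map size_enum_ord.
have bnd (i : 'I_n.+1) : (0 < nth 0%N w i <= n.+1)%N.
  by apply: (pword_mem pw); rewrite mem_nth // sw.
pose f (i : 'I_n.+1) : 'I_n.+1 := inord (nth 0%N w i).-1.
have fE i : (f i).+1 = nth 0%N w i by rewrite /f inordK; have := bnd i; lia.
have finj : injective f.
  move=> i j /(congr1 (fun k : 'I_n.+1 => k.+1)); rewrite !fE => /eqP.
  by rewrite (nth_uniq 0%N _ _ uw) ?sw // => /eqP /val_inj.
exists (perm finj); apply: (@eq_from_nth _ 0%N); rewrite /word size_map size_enum_ord ?sw //.
move=> i ilt; rewrite (nth_map (Ordinal ilt)) ?size_enum_ord // permE.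
by rewrite (_ : nth _ _ i = Ordinal ilt) ?fE //; apply/val_inj; rewrite /= nth_enum_ord.
Qed.

Lemma sum_perm_word n P F :
  \sum_(p : 'S_n | P (word p)) F (word p) = gf P F n.
Proof.
have perm_words : perm_eq [seq word p | p in 'S_n] (pwords n).
  apply: uniq_perm; rewrite ?pwords_uniq //.
    by rewrite map_inj_uniq ?enum_uniq //; apply: word_inj.
  move=> w; rewrite mem_pwords; apply/mapP/idP => [[p _ ->]|/word_surj [p <-]].
    exact: pword_word.
  by exists p; rewrite ?mem_enum.
rewrite /gf -(perm_big _ perm_words) big_image_cond; apply: eq_bigl => p.
by rewrite inE.
Qed.

End GeneratingFunctions.

(** * Functional equations for separable permutations *)

Local Open Scope ring_scope.

Lemma subr0_of_eq (V : zmodType) (x y : V) : x = y -> x - y = 0.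
Proof. by move=> ->; rewrite subrr. Qed.

(* Proves [x = y] by checking with [ring] that [x - y] equals [c], then leaves
   [c = 0]: [c] is a combination of differences that vanish by hypothesis. *)
Ltac by_combination c :=
  apply/eqP; rewrite -subr_eq0; apply/eqP; transitivity c; [ring|].

Section SeparableSeries.

Variable R : comUnitRingType.
Implicit Types (F f g h : seq nat -> R) (X Y : fps R).

Definition gf_sep f := gf separableb f.
Definition gf_sum f := gf (fun w => separableb w && reducible w) f.
Definition gf_skew f := gf (fun w => separableb w && skew_reducible w) f.
Definition gf_one f : fps R := fC (f [:: 1%N]) * fX R.

Lemma gf_oneE f : gf_one f = gf (pred1 [:: 1%N]) f.
Proof. by rewrite gf_singleton fmonoE expr1. Qed.

Lemma gf_sepE f : gf_sep f = gf_one f + gf_sum f + gf_skew f.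
Proof. by rewrite /gf_sep gf_sep_split gf_oneE. Qed.

Lemma gf_sumE F g h :
  (forall a b, separable a -> separable b -> F (dsum a b) = g a * h b) ->
  gf_sum F = (gf_one g + gf_skew g) * gf_sep h.
Proof. by move=> Fgh; rewrite /gf_sum (gf_sum_mul Fgh) gf_irr_split gf_oneE. Qed.

Lemma gf_skewE F g h :
  (forall a b, separable a -> separable b -> F (dskew a b) = g a * h b) ->
  gf_skew F = (gf_one g + gf_sum g) * gf_sep h.
Proof.
by move=> Fgh; rewrite /gf_skew (gf_skew_mul Fgh) gf_skew_irr_split gf_oneE.
Qed.

Lemma gf_sep0 f : gf_sep f 0%N = 0. Proof. exact: gf_coef0. Qed.
Lemma gf_sum0 f : gf_sum f 0%N = 0. Proof. by apply: gf_coef0 => w /andP []. Qed.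
Lemma gf_skew0 f : gf_skew f 0%N = 0. Proof. by apply: gf_coef0 => w /andP []. Qed.
Lemma gf_one0 f : gf_one f 0%N = 0. Proof. by rewrite /gf_one fcoefM0 fX0 mulr0. Qed.

Lemma eq_gfr P f g : (forall n w, pword n w -> f w = g w) -> gf P f = gf P g.
Proof.
move=> fg; apply/funext => n; rewrite /gf big_seq_cond [RHS]big_seq_cond.
by apply: eq_bigr => w /andP [+ _]; rewrite mem_pwords => /fg.
Qed.

Lemma gf_sep_compl f : gf_sep f = gf_sep (fun w => f (compl w)).
Proof. by rewrite /gf_sep gf_compl; apply: eq_gfl => n w /separableb_compl. Qed.

Lemma gf_sum_compl f : gf_sum f = gf_skew (fun w => f (compl w)).
Proof.
rewrite /gf_sum gf_compl; apply: eq_gfl => n w pw.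
by rewrite (separableb_compl pw) (reducible_compl pw).
Qed.

Lemma gf_skew_compl f : gf_skew f = gf_sum (fun w => f (compl w)).
Proof.
rewrite /gf_skew gf_compl; apply: eq_gfl => n w pw.
by rewrite (separableb_compl pw) (skew_reducible_compl pw).
Qed.

Lemma fcancel X Y (h : fps R) : h 0%N = 1 -> X * h = Y * h -> X = Y.
Proof.
move=> h0 XY; have h0u : h 0%N \is a GRing.unit by rewrite h0 unitr1.
by rewrite -[X]mulr1 -[Y]mulr1 -(fmulV h0u) !mulrA XY.
Qed.

Lemma fixpoint_unique (a v : fps R) X Y : a 0%N = 0 -> v 0%N = 0 ->
  X = (a + v * X) * (1 + X) -> Y = (a + v * Y) * (1 + Y) -> X = Y.
Proof.
move=> a0 v0 hX hY; apply/eqP; rewrite -subr_eq0; apply/eqP.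
apply: (@fps_fixpoint0 _ _ (a + v + v * X + v * Y)).
  by rewrite !fcoefD !fcoefM0 a0 v0 !mul0r !addr0.
by_combination ((X - (a + v * X) * (1 + X)) - (Y - (a + v * Y) * (1 + Y))).
by rewrite (subr0_of_eq hX) (subr0_of_eq hY); ring.
Qed.

End SeparableSeries.

Section Weights.

Variable R : comUnitRingType.
Implicit Types (x : R).

Definition wt0 : seq nat -> R := fun=> 1.
Definition wt_lmax x w := x ^+ lmax w.
Definition wt_rmax x w := x ^+ rmax w.
Definition wt_lmin x w := x ^+ lmin w.
Definition wt_rmin x w := x ^+ rmin w.

End Weights.

(* Proves [F (a (+) b) = g a * h b], or its skew analogue, for monomial weights
   from the behaviour of the four statistics on sums. *)
Ltac factor_weights :=
  let a := fresh "a" in let b := fresh "b" in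
  let pa := fresh "pa" in let pb := fresh "pb" in
  let a0 := fresh "a0" in let b0 := fresh "b0" in
  move=> a b /separable_pword [pa a0] /separable_pword [pb b0];
  rewrite /wt0 /wt_lmax /wt_rmax /wt_lmin /wt_rmin
    ?lmax_dsum ?lmin_dsum ?rmax_dsum ?rmin_dsum
    ?lmax_dskew ?lmin_dskew ?rmax_dskew ?rmin_dskew // ?exprD; ring.

Section Univariate.

Variables (R : comUnitRingType) (z : R).

Local Notation t := (fX R).
Local Notation a := (fC z * fX R).
(* [C] counts separable permutations and [v] the sum-irreducible ones. *)
Local Notation C := (gf_sep (@wt0 R)).
Local Notation v := (fX R + gf_skew (@wt0 R)).

Definition Srmax := gf_sep (wt_rmax z).

Lemma Srmax0 : Srmax 0%N = 0. Proof. exact: gf_sep0. Qed.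

Lemma gf_one_wt0 : gf_one (@wt0 R) = t. Proof. by rewrite /gf_one fC1 mul1r. Qed.
Lemma gf_one_wt x (st : seq nat -> nat) : st [:: 1%N] = 1%N ->
  gf_one (fun w => x ^+ st w) = fC x * t.
Proof. by move=> st1; rewrite /gf_one st1 expr1. Qed.

Lemma gf_sum_wt0 : gf_sum (@wt0 R) = v * C.
Proof. by rewrite (@gf_sumE _ _ (@wt0 R) (@wt0 R)) ?gf_one_wt0 //; factor_weights. Qed.

Lemma gf_sep_wt0_eqn : v * (1 + C) = C.
Proof.
have hC := gf_sepE (@wt0 R); rewrite gf_one_wt0 gf_sum_wt0 in hC.
by by_combination (- (C - (t + v * C + gf_skew (@wt0 R)))); rewrite (subr0_of_eq hC); ring.
Qed.

Lemma gf_sum_rmax : gf_sum (wt_rmax z) = v * Srmax.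
Proof. by rewrite (@gf_sumE _ _ (@wt0 R) (wt_rmax z)) ?gf_one_wt0 //; factor_weights. Qed.

Lemma gf_skew_rmax : gf_skew (wt_rmax z) = (a + gf_sum (wt_rmax z)) * Srmax.
Proof. by rewrite (@gf_skewE _ _ (wt_rmax z) (wt_rmax z)) ?gf_one_wt //; factor_weights. Qed.

Lemma Srmax_fixpoint : Srmax = (a + v * Srmax) * (1 + Srmax).
Proof.
have hS := gf_sepE (wt_rmax z); rewrite gf_one_wt // -/Srmax in hS.
have hP := gf_sum_rmax; have hM := gf_skew_rmax.
set P := gf_sum _ in hS hP hM; set M := gf_skew _ in hS hM.
by_combination ((Srmax - (a + P + M)) + (1 + Srmax) * (P - v * Srmax)
  + (M - (a + P) * Srmax)).
by rewrite (subr0_of_eq hS) (subr0_of_eq hP) (subr0_of_eq hM); ring.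
Qed.

Lemma gf_skew_irr_rmax_eqn : (a + gf_sum (wt_rmax z)) * (1 + Srmax) = Srmax.
Proof.
have hS := gf_sepE (wt_rmax z); rewrite gf_one_wt // -/Srmax in hS.
have hM := gf_skew_rmax; set P := gf_sum _ in hS hM *; set M := gf_skew _ in hS hM.
by_combination (- (Srmax - (a + P + M)) - (M - (a + P) * Srmax)).
by rewrite (subr0_of_eq hS) (subr0_of_eq hM); ring.
Qed.

Lemma gf_sum_lmax : gf_sum (wt_lmax z) = (a + gf_skew (wt_lmax z)) * gf_sep (wt_lmax z).
Proof. by rewrite (@gf_sumE _ _ (wt_lmax z) (wt_lmax z)) ?gf_one_wt //; factor_weights. Qed.

Lemma gf_skew_lmax : gf_skew (wt_lmax z) = (a + gf_sum (wt_lmax z)) * C.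
Proof. by rewrite (@gf_skewE _ _ (wt_lmax z) (@wt0 R)) ?gf_one_wt //; factor_weights. Qed.

(* The skew part is [v] times the whole series, so the series satisfies the
   fixpoint equation of [Srmax]. *)
Lemma gf_sep_lmax : gf_sep (wt_lmax z) = Srmax.
Proof.
have hU := gf_sepE (wt_lmax z); rewrite gf_one_wt // in hU.
have hP := gf_sum_lmax; have hM := gf_skew_lmax.
set U := gf_sep _ in hU hP *; set P := gf_sum _ in hU hP hM; set M := gf_skew _ in hU hP hM.
have hMv : M = v * U.
  apply: (@fcancel _ _ _ (1 + C)); first by rewrite fcoefD gf_sep0 addr0.
  by_combination ((M - (a + P) * C) - C * (U - (a + P + M)) - U * (v * (1 + C) - C)).
  by rewrite (subr0_of_eq hM) (subr0_of_eq hU) (subr0_of_eq gf_sep_wt0_eqn); ring.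
have a0 : a 0%N = 0 by rewrite fcoefM0 fX0 mulr0.
have v0 : v 0%N = 0 by rewrite fcoefD fX0 gf_skew0 addr0.
apply: (fixpoint_unique a0 v0 _ Srmax_fixpoint).
by_combination ((U - (a + P + M)) + (P - (a + M) * U) + (1 + U) * (M - v * U)).
by rewrite (subr0_of_eq hU) (subr0_of_eq hP) (subr0_of_eq hMv); ring.
Qed.

Lemma gf_irr_lmax_eqn : (a + gf_skew (wt_lmax z)) * (1 + Srmax) = Srmax.
Proof.
have hU := gf_sepE (wt_lmax z); rewrite gf_one_wt // gf_sep_lmax in hU.
have hP := gf_sum_lmax; rewrite gf_sep_lmax in hP.
set P := gf_sum _ in hU hP; set M := gf_skew _ in hU hP *.
by_combination (- (Srmax - (a + P + M)) - (P - (a + M) * Srmax)).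
by rewrite (subr0_of_eq hU) (subr0_of_eq hP); ring.
Qed.

Lemma gf_sum_lmax_eqn : gf_sum (wt_lmax z) * (1 + Srmax) = Srmax * Srmax.
Proof.
have hP := gf_sum_lmax; rewrite gf_sep_lmax in hP.
have hD := gf_irr_lmax_eqn; set P := gf_sum _ in hP *; set M := gf_skew _ in hP hD.
by_combination ((P - (a + M) * Srmax) * (1 + Srmax)
  + Srmax * ((a + M) * (1 + Srmax) - Srmax)).
by rewrite (subr0_of_eq hP) (subr0_of_eq hD); ring.
Qed.

Lemma gf_sep_lmin : gf_sep (wt_lmin z) = Srmax.
Proof.
rewrite gf_sep_compl -gf_sep_lmax /gf_sep; apply: eq_gfr => n w pw.
by rewrite /wt_lmin /wt_lmax (lmin_compl pw).
Qed.

Lemma gf_sep_rmin : gf_sep (wt_rmin z) = Srmax.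
Proof.
rewrite gf_sep_compl /Srmax /gf_sep; apply: eq_gfr => n w pw.
by rewrite /wt_rmin /wt_rmax (rmin_compl pw).
Qed.

Lemma gf_sum_lmin : gf_sum (wt_lmin z) = gf_skew (wt_lmax z).
Proof.
rewrite gf_sum_compl /gf_skew; apply: eq_gfr => n w pw.
by rewrite /wt_lmin /wt_lmax (lmin_compl pw).
Qed.

Lemma gf_skew_lmin : gf_skew (wt_lmin z) = gf_sum (wt_lmax z).
Proof.
rewrite gf_skew_compl /gf_sum; apply: eq_gfr => n w pw.
by rewrite /wt_lmin /wt_lmax (lmin_compl pw).
Qed.

Lemma gf_skew_rmin : gf_skew (wt_rmin z) = gf_sum (wt_rmax z).
Proof.
rewrite gf_skew_compl /gf_sum; apply: eq_gfr => n w pw.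
by rewrite /wt_rmin /wt_rmax (rmin_compl pw).
Qed.
Lemma gf_irr_lmin_eqn : (a + gf_sum (wt_lmin z)) * (1 + Srmax) = Srmax.
Proof. by rewrite gf_sum_lmin gf_irr_lmax_eqn. Qed.

Lemma gf_skew_lmin_eqn : gf_skew (wt_lmin z) * (1 + Srmax) = Srmax * Srmax.
Proof. by rewrite gf_skew_lmin gf_sum_lmax_eqn. Qed.

Lemma gf_skew_irr_rmin_eqn : (a + gf_skew (wt_rmin z)) * (1 + Srmax) = Srmax.
Proof. by rewrite gf_skew_rmin gf_skew_irr_rmax_eqn. Qed.

End Univariate.

Section Trivariate.

Variables (R : comUnitRingType) (x1 x2 x3 : R).

Local Notation t := (fX R).
Local Notation s1 := (Srmax x1).
Local Notation s2 := (Srmax x2).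
Local Notation s3 := (Srmax x3).

Definition wt_lmax_lmin w := x1 ^+ lmax w * x3 ^+ lmin w.
Definition wt_lmax_rmax w := x1 ^+ lmax w * x2 ^+ rmax w.
Definition wt_rmax_lmin w := x2 ^+ rmax w * x3 ^+ lmin w.
Definition wt_rmin_lmin w := x1 ^+ rmin w * x3 ^+ lmin w.
Definition wt_rmin_rmax w := x1 ^+ rmin w * x2 ^+ rmax w.
Definition wt_lmax_rmax_lmin w := x1 ^+ lmax w * x2 ^+ rmax w * x3 ^+ lmin w.
Definition wt_rmin_rmax_lmin w := x1 ^+ rmin w * x2 ^+ rmax w * x3 ^+ lmin w.

Ltac factor_weights3 :=
  rewrite /wt_lmax_lmin /wt_lmax_rmax /wt_rmax_lmin /wt_rmin_lmin /wt_rmin_rmax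
    /wt_lmax_rmax_lmin /wt_rmin_rmax_lmin; factor_weights.

Lemma gf_one_pair x y (st st' : seq nat -> nat) :
  st [:: 1%N] = 1%N -> st' [:: 1%N] = 1%N ->
  gf_one (fun w => x ^+ st w * y ^+ st' w) = fC x * fC y * t.
Proof. by move=> st1 st1'; rewrite /gf_one st1 st1' !expr1 fCM. Qed.

Lemma gf_one_triple :
  gf_one wt_lmax_rmax_lmin = fC x1 * fC x2 * fC x3 * t /\
  gf_one wt_rmin_rmax_lmin = fC x1 * fC x2 * fC x3 * t.
Proof.
have [l1 r1 l1' r1'] : [/\ lmax [:: 1%N] = 1%N, rmax [:: 1%N] = 1%N,
  lmin [:: 1%N] = 1%N & rmin [:: 1%N] = 1%N] by [].
by rewrite /gf_one /wt_lmax_rmax_lmin /wt_rmin_rmax_lmin l1 r1 l1' r1' !expr1 !fCM.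
Qed.

Lemma gf_irr_lmax_lmin_eqn :
  (gf_one wt_lmax_lmin + gf_skew wt_lmax_lmin) * (1 - s1 * s3) =
  gf_one wt_lmax_lmin * (1 + s3).
Proof.
have hP : gf_sum wt_lmax_lmin = (gf_one wt_lmax_lmin + gf_skew wt_lmax_lmin) * s1.
  by rewrite -(gf_sep_lmax x1) (@gf_sumE _ _ wt_lmax_lmin (wt_lmax x1)) //; factor_weights3.
have hM : gf_skew wt_lmax_lmin = (gf_one wt_lmax_lmin + gf_sum wt_lmax_lmin) * s3.
  by rewrite -(gf_sep_lmin x3) (@gf_skewE _ _ wt_lmax_lmin (wt_lmin x3)) //; factor_weights3.
set o := gf_one _ in hP hM *; set P := gf_sum _ in hP hM; set M := gf_skew _ in hP hM *.
by_combination ((M - (o + P) * s3) + s3 * (P - (o + M) * s1)).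
by rewrite (subr0_of_eq hP) (subr0_of_eq hM); ring.
Qed.

Lemma gf_sep_lmax_rmax_eqn :
  gf_sep wt_lmax_rmax * (1 - s1 * s2) = gf_one wt_lmax_rmax * (1 + s1) * (1 + s2).
Proof.
set q := fC x1 * t + gf_skew (wt_lmax x1).
have hU := gf_sepE wt_lmax_rmax.
have hP : gf_sum wt_lmax_rmax = q * gf_sep wt_lmax_rmax.
  by rewrite (@gf_sumE _ _ (wt_lmax x1) wt_lmax_rmax) ?gf_one_wt //; factor_weights3.
have hM : gf_skew wt_lmax_rmax = (gf_one wt_lmax_rmax + gf_sum wt_lmax_rmax) * s2.
  by rewrite /Srmax (@gf_skewE _ _ wt_lmax_rmax (wt_rmax x2)) //; factor_weights3.
have hq : q * (1 + s1) = s1 := gf_irr_lmax_eqn x1.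
set U := gf_sep _ in hU hP *; set o := gf_one _ in hU hM *.
set P := gf_sum _ in hU hP hM; set M := gf_skew wt_lmax_rmax in hU hM.
by_combination ((1 + s1) * ((U - (o + P + M)) + (M - (o + P) * s2))
  + (1 + s1) * (1 + s2) * (P - q * U) + (1 + s2) * U * (q * (1 + s1) - s1)).
by rewrite (subr0_of_eq hU) (subr0_of_eq hM) (subr0_of_eq hP) (subr0_of_eq hq); ring.
Qed.

Definition B3 := gf_sum wt_rmax_lmin + gf_one wt_rmax_lmin.

Lemma gf_sep_rmax_lmin_eqn : (1 + gf_sep wt_rmax_lmin) * (1 - B3) = 1.
Proof.
have hU := gf_sepE wt_rmax_lmin.
have hM : gf_skew wt_rmax_lmin = B3 * gf_sep wt_rmax_lmin.
  by rewrite /B3 addrC (@gf_skewE _ _ wt_rmax_lmin wt_rmax_lmin) //; factor_weights3.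
rewrite /B3 in hM *; set U := gf_sep _ in hU hM *.
set o := gf_one _ in hU hM *; set P := gf_sum _ in hU hM *; set M := gf_skew _ in hU hM.
by_combination ((U - (o + P + M)) + (M - (P + o) * U)).
by rewrite (subr0_of_eq hU) (subr0_of_eq hM); ring.
Qed.

Lemma gf_irr_rmin_lmin_eqn :
  (gf_one wt_rmin_lmin + gf_skew wt_rmin_lmin) * (1 - s1 * s3) =
  gf_one wt_rmin_lmin * (1 + s3).
Proof.
set r := fC x3 * t + gf_sum (wt_lmin x3).
have hU := gf_sepE wt_rmin_lmin.
have hP : gf_sum wt_rmin_lmin = (gf_one wt_rmin_lmin + gf_skew wt_rmin_lmin) * s1.
  by rewrite -(gf_sep_rmin x1) (@gf_sumE _ _ wt_rmin_lmin (wt_rmin x1)) //; factor_weights3.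
have hM : gf_skew wt_rmin_lmin = r * gf_sep wt_rmin_lmin.
  by rewrite (@gf_skewE _ _ (wt_lmin x3) wt_rmin_lmin) ?gf_one_wt //; factor_weights3.
have hr : r * (1 + s3) = s3 := gf_irr_lmin_eqn x3.
set U := gf_sep _ in hU hM; set o := gf_one _ in hU hP *.
set P := gf_sum wt_rmin_lmin in hU hP; set M := gf_skew _ in hU hP hM *.
by_combination ((1 + s3) * (M - r * U) + U * (r * (1 + s3) - s3)
  + s3 * ((U - (o + P + M)) + (P - (o + M) * s1))).
by rewrite (subr0_of_eq hU) (subr0_of_eq hM) (subr0_of_eq hP) (subr0_of_eq hr); ring.
Qed.

Lemma gf_sep_rmin_rmax_eqn :
  gf_sep wt_rmin_rmax * (1 - s1 * s2) = gf_one wt_rmin_rmax * (1 + s1) * (1 + s2).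
Proof.
set q := fC x1 * t + gf_skew (wt_rmin x1).
set r := fC x2 * t + gf_sum (wt_rmax x2).
have hU := gf_sepE wt_rmin_rmax.
have hP : gf_sum wt_rmin_rmax = q * gf_sep wt_rmin_rmax.
  by rewrite (@gf_sumE _ _ (wt_rmin x1) wt_rmin_rmax) ?gf_one_wt //; factor_weights3.
have hM : gf_skew wt_rmin_rmax = r * gf_sep wt_rmin_rmax.
  by rewrite (@gf_skewE _ _ (wt_rmax x2) wt_rmin_rmax) ?gf_one_wt //; factor_weights3.
have hq : q * (1 + s1) = s1 := gf_skew_irr_rmin_eqn x1.
have hr : r * (1 + s2) = s2 := gf_skew_irr_rmax_eqn x2.
set U := gf_sep _ in hU hP hM *; set o := gf_one _ in hU *.
set P := gf_sum wt_rmin_rmax in hU hP; set M := gf_skew wt_rmin_rmax in hU hM.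
by_combination ((1 + s1) * (1 + s2) * ((U - (o + P + M)) + (P - q * U) + (M - r * U))
  + (1 + s2) * U * (q * (1 + s1) - s1) + (1 + s1) * U * (r * (1 + s2) - s2)).
rewrite (subr0_of_eq hU) (subr0_of_eq hM) (subr0_of_eq hP).
by rewrite (subr0_of_eq hq) (subr0_of_eq hr); ring.
Qed.

(* [E3], [B3] and [D3] are the series E, A(z2,z3) + t z2 z3 and D of the statement. *)
Definition num3 := (s1 + 1) * (s2 + 1) * (s3 + 1) * fmono (x1 ^+ 2 * x2 * x3) 2.
Definition den3 := (1 - s1 * s3) * (1 - s1 * s2).
Definition E3 := gf_one wt_lmax_rmax_lmin + fdiv num3 den3.
Definition D3 := 1 - B3.

Lemma den3_unit : den3 0%N \is a GRing.unit.
Proof. by rewrite /den3 fcoefM0 !fcoefD !fcoefN !fcoefM0 !Srmax0 mulr0 subr0 mulr1 unitr1. Qed.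

Lemma D3_unit : D3 0%N \is a GRing.unit.
Proof. by rewrite /D3 /B3 fcoefD fcoefN fcoefD gf_sum0 gf_one0 addr0 subr0 unitr1. Qed.

Lemma num3E :
  num3 = (1 + s1) * (1 + s2) * (1 + s3) * (fC x1 * fC x3 * t) * (fC x1 * fC x2 * t).
Proof. by rewrite /num3 fmonoE !fCM; ring. Qed.

Lemma gf_sum_lmax_rmax_lmin : gf_sum wt_lmax_rmax_lmin = fdiv num3 den3.
Proof.
apply: fdiv_eq; first exact: den3_unit.
have hP : gf_sum wt_lmax_rmax_lmin =
    (gf_one wt_lmax_lmin + gf_skew wt_lmax_lmin) * gf_sep wt_lmax_rmax.
  by rewrite (@gf_sumE _ _ wt_lmax_lmin wt_lmax_rmax) //; factor_weights3.
have hI := gf_irr_lmax_lmin_eqn; have hU := gf_sep_lmax_rmax_eqn.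
rewrite hP /den3 num3E -(gf_one_pair x1 x3 (st := lmax) (st' := lmin)) //.
rewrite -(gf_one_pair x1 x2 (st := lmax) (st' := rmax)) //.
transitivity ((gf_one wt_lmax_lmin + gf_skew wt_lmax_lmin) * (1 - s1 * s3) *
              (gf_sep wt_lmax_rmax * (1 - s1 * s2))); last by ring.
by rewrite hI hU; ring.
Qed.

Lemma gf_sum_rmin_rmax_lmin : gf_sum wt_rmin_rmax_lmin = fdiv num3 den3.
Proof.
apply: fdiv_eq; first exact: den3_unit.
have hP : gf_sum wt_rmin_rmax_lmin =
    (gf_one wt_rmin_lmin + gf_skew wt_rmin_lmin) * gf_sep wt_rmin_rmax.
  by rewrite (@gf_sumE _ _ wt_rmin_lmin wt_rmin_rmax) //; factor_weights3.
have hI := gf_irr_rmin_lmin_eqn; have hU := gf_sep_rmin_rmax_eqn.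
rewrite hP /den3 num3E -(gf_one_pair x1 x3 (st := rmin) (st' := lmin)) //.
rewrite -(gf_one_pair x1 x2 (st := rmin) (st' := rmax)) //.
transitivity ((gf_one wt_rmin_lmin + gf_skew wt_rmin_lmin) * (1 - s1 * s3) *
              (gf_sep wt_rmin_rmax * (1 - s1 * s2))); last by ring.
by rewrite hI hU; ring.
Qed.

Lemma gf_skew_lmax_rmax_lmin : gf_skew wt_lmax_rmax_lmin =
  (gf_one wt_lmax_rmax_lmin + gf_sum wt_lmax_rmax_lmin) * gf_sep wt_rmax_lmin.
Proof. by rewrite (@gf_skewE _ _ wt_lmax_rmax_lmin wt_rmax_lmin) //; factor_weights3. Qed.

Lemma gf_skew_rmin_rmax_lmin : gf_skew wt_rmin_rmax_lmin = B3 * gf_sep wt_rmin_rmax_lmin.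
Proof.
by rewrite /B3 addrC (@gf_skewE _ _ wt_rmax_lmin wt_rmin_rmax_lmin) //; factor_weights3.
Qed.

Lemma gf_sep_lmax_rmax_lmin : gf_sep wt_lmax_rmax_lmin = fdiv E3 D3.
Proof.
apply: fdiv_eq; first exact: D3_unit.
symmetry.
rewrite gf_sepE gf_skew_lmax_rmax_lmin /E3 -gf_sum_lmax_rmax_lmin /D3.
set o := gf_one _; set P := gf_sum _.
by_combination ((o + P) * ((1 + gf_sep wt_rmax_lmin) * (1 - B3) - 1)).
by rewrite gf_sep_rmax_lmin_eqn; ring.
Qed.

Lemma gf_irr_lmax_rmax_lmin :
  gf_one wt_lmax_rmax_lmin + gf_skew wt_lmax_rmax_lmin =
  fdiv (gf_one wt_lmax_rmax_lmin + B3 * (E3 - gf_one wt_lmax_rmax_lmin)) D3.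
Proof.
apply: fdiv_eq; first exact: D3_unit.
symmetry.
rewrite gf_skew_lmax_rmax_lmin /E3 -gf_sum_lmax_rmax_lmin /D3.
set o := gf_one _; set P := gf_sum _.
by_combination ((o + P) * ((1 + gf_sep wt_rmax_lmin) * (1 - B3) - 1)).
by rewrite gf_sep_rmax_lmin_eqn; ring.
Qed.

Lemma gf_one_rmin_rmax_lmin : gf_one wt_rmin_rmax_lmin = gf_one wt_lmax_rmax_lmin.
Proof. by case: gf_one_triple => -> ->. Qed.

Lemma E3_rmin_rmax_lmin : E3 = gf_one wt_rmin_rmax_lmin + gf_sum wt_rmin_rmax_lmin.
Proof. by rewrite gf_one_rmin_rmax_lmin gf_sum_rmin_rmax_lmin. Qed.

Lemma gf_sep_rmin_rmax_lmin : gf_sep wt_rmin_rmax_lmin = fdiv E3 D3.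
Proof.
apply: fdiv_eq; first exact: D3_unit.
symmetry.
have hU := gf_sepE wt_rmin_rmax_lmin; have hM := gf_skew_rmin_rmax_lmin.
rewrite E3_rmin_rmax_lmin /D3; set U := gf_sep _ in hU hM *.
set o := gf_one _ in hU *; set P := gf_sum _ in hU *; set M := gf_skew _ in hU hM.
by_combination ((U - (o + P + M)) + (M - B3 * U)).
by rewrite (subr0_of_eq hU) (subr0_of_eq hM); ring.
Qed.

Lemma gf_irr_rmin_rmax_lmin :
  gf_one wt_rmin_rmax_lmin + gf_skew wt_rmin_rmax_lmin =
  fdiv (gf_one wt_lmax_rmax_lmin + B3 * (E3 - gf_one wt_lmax_rmax_lmin)) D3.
Proof.
apply: fdiv_eq; first exact: D3_unit.
symmetry.
have hU : gf_sep wt_rmin_rmax_lmin * D3 = E3.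
  by rewrite gf_sep_rmin_rmax_lmin /fdiv fmulE -mulrA [_ * D3]mulrC fmulV ?mulr1 ?D3_unit.
rewrite gf_skew_rmin_rmax_lmin gf_one_rmin_rmax_lmin /D3 in hU *.
by_combination (B3 * (gf_sep wt_rmin_rmax_lmin * (1 - B3) - E3)).
by rewrite (subr0_of_eq hU); ring.
Qed.

Lemma gf_sum_rmax_lmin :
  gf_sum wt_rmax_lmin = s2 * (fmono x3 1 + fdiv (s3 * s3) (s3 + 1)).
Proof.
rewrite (@gf_sumE _ _ (wt_lmin x3) (wt_rmax x2)) ?gf_one_wt //; last by factor_weights3.
have -> : gf_skew (wt_lmin x3) = fdiv (s3 * s3) (s3 + 1).
  apply: fdiv_eq; first by rewrite fcoefD Srmax0 add0r unitr1.
  by rewrite -gf_skew_lmin_eqn addrC.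
by rewrite fmonoE expr1 mulrC.
Qed.

End Trivariate.

(** * The generating functions of the theorem *)

Local Notation T1 := (wt_lmax_rmax_lmin z1 z2 z3).
Local Notation T2 := (wt_rmin_rmax_lmin z1 z2 z3).
Local Notation W23 := (wt_rmax_lmin z2 z3).
Local Notation E := (E3 z1 z2 z3).
Local Notation D := (D3 z2 z3).
Local Notation B := (B3 z2 z3).

Lemma GF_gf st1 st2 st3 P :
  GF st1 st2 st3 P = gf P (fun w => z1 ^+ st1 w * z2 ^+ st2 w * z3 ^+ st3 w).
Proof.
apply/funext => n.
by rewrite /GF (sum_perm_word n P (fun w => z1 ^+ st1 w * z2 ^+ st2 w * z3 ^+ st3 w)).
Qed.

Lemma GF_lmin_rmin_lmax P : GF lmin rmin lmax P = gf (fun w => P (compl w)) T1.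
Proof.
rewrite GF_gf gf_compl; apply: eq_gfr => n w pw.
by rewrite /wt_lmax_rmax_lmin (lmin_compl pw) (rmin_compl pw) (lmax_compl pw).
Qed.

Lemma GF_rmax_rmin_lmax P : GF rmax rmin lmax P = gf (fun w => P (compl w)) T2.
Proof.
rewrite GF_gf gf_compl; apply: eq_gfr => n w pw.
by rewrite /wt_rmin_rmax_lmin (rmax_compl pw) (rmin_compl pw) (lmax_compl pw).
Qed.

Section Classes.

Variable R : comUnitRingType.
Implicit Type f : seq nat -> R.

Lemma gf_irrsep f : gf irrsep f = gf_one f + gf_skew f.
Proof.
rewrite gf_oneE /gf_skew -gf_irr_split; apply: eq_gfl => n w _; rewrite /irrsep /irreducible.
by case: (boolP (separableb w)) => //= /separableP /separable_pword [_ ->].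
Qed.

Lemma gf_allsep_compl f : gf (fun w => allsep (compl w)) f = gf_sep f.
Proof. by apply: eq_gfl => n w /separableb_compl. Qed.

Lemma gf_redsep_compl f : gf (fun w => redsep (compl w)) f = gf_skew f.
Proof.
by apply: eq_gfl => n w pw; rewrite /redsep (separableb_compl pw) (reducible_compl pw).
Qed.

Lemma gf_irrsep_compl f : gf (fun w => irrsep (compl w)) f = gf_one f + gf_sum f.
Proof.
rewrite gf_oneE /gf_sum -gf_skew_irr_split; apply: eq_gfl => n w pw.
rewrite /irrsep /irreducible size_compl (separableb_compl pw) (reducible_compl pw).
by case: (boolP (separableb w)) => //= /separableP /separable_pword [_ ->].
Qed.

End Classes.

Lemma Sgf_Srmax z : Sgf z = Srmax z.
Proof. by apply/funext => n; rewrite /Sgf (sum_perm_word n separableb (wt_rmax z)). Qed.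

Lemma Tz_gf_one : Tz = gf_one T1.
Proof.
have [e _] := gf_one_triple z1 z2 z3.
by rewrite /Tz fmonoE expr1 e -!fCM.
Qed.

Lemma Egf_E3 : Egf = E.
Proof.
by rewrite /Egf /S1 /S2 /S3 !Sgf_Srmax Tz_gf_one.
Qed.

Lemma Agf_E : Agf = gf_sum W23.
Proof. by rewrite /Agf /S2 /S3 !Sgf_Srmax gf_sum_rmax_lmin. Qed.

Lemma Tz23_E : Tz23 = gf_one W23.
Proof.
by rewrite (gf_one_pair _ _ (st := rmax) (st' := lmin)) // /Tz23 fmonoE expr1 fCM.
Qed.

Lemma Dgf_D3 : Dgf = D.
Proof.
rewrite /Dgf Agf_E Tz23_E /D3 /B3.
change (1 - gf_sum W23 - gf_one W23 =
        1 - (gf_sum W23 + gf_one W23)).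
by ring.
Qed.

Lemma Fgf_E : Fgf = fdiv (gf_one T1 + B * (E - gf_one T1)) (D).
Proof. by rewrite /Fgf -Dgf_D3 -Egf_E3 -Tz_gf_one Agf_E Tz23_E. Qed.

Lemma gf_sep_T1E : gf_sep T1 = fdiv Egf Dgf.
Proof. by rewrite Egf_E3 Dgf_D3; apply: gf_sep_lmax_rmax_lmin. Qed.

Lemma gf_sep_T2E : gf_sep T2 = fdiv Egf Dgf.
Proof. by rewrite Egf_E3 Dgf_D3; apply: gf_sep_rmin_rmax_lmin. Qed.

Lemma gf_sum_T1E : gf_sum T1 = fsub Egf Tz.
Proof. by rewrite fsubE Egf_E3 Tz_gf_one /E3 gf_sum_lmax_rmax_lmin; ring. Qed.

Lemma gf_sum_T2E : gf_sum T2 = fsub Egf Tz.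
Proof. by rewrite fsubE Egf_E3 Tz_gf_one /E3 gf_sum_rmin_rmax_lmin; ring. Qed.

Lemma gf_irr_T1E : gf_one T1 + gf_skew T1 = Fgf.
Proof. by rewrite Fgf_E; apply: gf_irr_lmax_rmax_lmin. Qed.

Lemma gf_irr_T2E : gf_one T2 + gf_skew T2 = Fgf.
Proof. by rewrite Fgf_E; apply: gf_irr_rmin_rmax_lmin. Qed.

Lemma gf_skew_irr_T1E : gf_one T1 + gf_sum T1 = Egf.
Proof. by rewrite Egf_E3 /E3 gf_sum_lmax_rmax_lmin. Qed.

Lemma gf_skew_irr_T2E : gf_one T2 + gf_sum T2 = Egf.
Proof. by rewrite Egf_E3 E3_rmin_rmax_lmin. Qed.

Lemma gf_skew_T1E : gf_skew T1 = fadd (fopp Tz) Fgf.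
Proof. by rewrite -gf_irr_T1E Tz_gf_one faddE foppE; ring. Qed.

Lemma gf_skew_T2E : gf_skew T2 = fadd (fopp Tz) Fgf.
Proof. by rewrite -gf_irr_T2E gf_one_rmin_rmax_lmin Tz_gf_one faddE foppE; ring. Qed.

Theorem theorem8 :
  (* (i) all separable permutations: G_T = E / D *)
  (GF lmax rmax lmin allsep =1 fdiv Egf Dgf /\
   GF lmin rmin lmax allsep =1 fdiv Egf Dgf /\
   GF rmin rmax lmin allsep =1 fdiv Egf Dgf /\
   GF rmax rmin lmax allsep =1 fdiv Egf Dgf) /\
  (* (ii) *)
  (GF lmax rmax lmin redsep =1 fsub Egf Tz /\
   GF lmax rmax lmin irrsep =1 Fgf /\
   GF rmin rmax lmin redsep =1 fsub Egf Tz /\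
   GF rmin rmax lmin irrsep =1 Fgf) /\
  (* (iii) *)
  (GF lmin rmin lmax irrsep =1 Egf /\
   GF lmin rmin lmax redsep =1 fadd (fopp Tz) Fgf /\
   GF rmax rmin lmax irrsep =1 Egf /\
   GF rmax rmin lmax redsep =1 fadd (fopp Tz) Fgf).
Proof.
do !split; move=> n; congr (_ n).
- by rewrite GF_gf; apply: gf_sep_T1E.
- by rewrite GF_lmin_rmin_lmax gf_allsep_compl; apply: gf_sep_T1E.
- by rewrite GF_gf; apply: gf_sep_T2E.
- by rewrite GF_rmax_rmin_lmax gf_allsep_compl; apply: gf_sep_T2E.
- by rewrite GF_gf; apply: gf_sum_T1E.
- by rewrite GF_gf gf_irrsep; apply: gf_irr_T1E.
- by rewrite GF_gf; apply: gf_sum_T2E.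
- by rewrite GF_gf gf_irrsep; apply: gf_irr_T2E.
- by rewrite GF_lmin_rmin_lmax gf_irrsep_compl; apply: gf_skew_irr_T1E.
- by rewrite GF_lmin_rmin_lmax gf_redsep_compl; apply: gf_skew_T1E.
- by rewrite GF_rmax_rmin_lmax gf_irrsep_compl; apply: gf_skew_irr_T2E.
- by rewrite GF_rmax_rmin_lmax gf_redsep_compl; apply: gf_skew_T2E.
Qed.
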